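(* Let $r_0>0$ and $T>0$, and let $$D_T=\{(u,r,s,\phi):\ u\ge 0,\ r\ge r_0,\ u+r\le T+r_0,\ -1\le s\le 1,\ \phi\in\mathbb{R}\}.$$ Let $R,P,Q$ be real-valued functions that are $C^1$ on $D_T$, $2\pi$-periodic in $\phi$, and satisfy at all points of $D_T$ with $|s|<1$ the system $$2R_u = R_r+\frac{\sqrt{1-s^2}}{r}P_s+\frac{1}{r\sqrt{1-s^2}}Q_\phi-\frac{sP}{r\sqrt{1-s^2}},\qquad P_r=\frac{\sqrt{1-s^2}}{r}R_s-\frac{P}{r},\qquad Q_r=\frac{1}{r\sqrt{1-s^2}}R_\phi-\frac{Q}{r}.$$ (The values $R|_{u=0}=f(r,s,\phi)$, $r_0\le r\le T+r_0$, and $P|_{r=r_0}=g(u,s,\phi)$, $Q|_{r=r_0}=h(u,s,\phi)$, $0\le u\le T$, are the free data of this characteristic problem.) Then, with $v=(R,P,Q)$, $$\|v\|_T^2\le 2\left(\int_{\Sigma_u}R^2\,d\Sigma_u+\int_{\Sigma_r}\left(P^2+Q^2\right)d\Sigma_r\right).$$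
   Context: Coordinates: $(r,\theta,\phi)$ are spherical spatial coordinates of Minkowski space, $s=\cos\theta$, and $u=t-r$; subscripts denote partial derivatives. The system is the first-order reduction of the wave equation for $g=r\psi$ via $R=g_r$, $P=g_s\sqrt{1-s^2}/r$, $Q=g_\phi/(r\sqrt{1-s^2})$, but the claim concerns arbitrary solutions $(R,P,Q)$ as specified. Surfaces and measures: $\Sigma_u=\{u=0,\ r_0\le r\le T+r_0\}$ (a null cone) with $d\Sigma_u=dr\,ds\,d\phi$; $\Sigma_r=\{r=r_0,\ 0\le u\le T\}$ (a timelike worldtube) with $d\Sigma_r=du\,ds\,d\phi$; in both, $s\in[-1,1]$ and $\phi\in[0,2\pi]$. The norm on $\Sigma_T=\{u+r=T+r_0\}$ is $$\|v\|_T^2=\int_{r_0}^{T+r_0}\!\!\int_{-1}^{1}\!\!\int_0^{2\pi}\big(R^2+P^2+Q^2\big)(T+r_0-r,r,s,\phi)\,d\phi\,ds\,dr .$$ *)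

From Stdlib Require Import Reals Lra.
From Coquelicot Require Import Coquelicot.
Open Scope R_scope.

(* Points are (u, r, s, phi); functions are curried: F u r s phi. *)

Definition DT (r0 T u r s phi : R) : Prop :=
  0 <= u /\ r0 <= r /\ u + r <= T + r0 /\ -1 <= s <= 1.

Definition Dom := R -> R -> R -> R -> Prop.
Definition F4 := R -> R -> R -> R -> R.

Definition cont_on (D : Dom) (F : F4) : Prop :=
  forall u r s p, D u r s p ->
  forall eps, 0 < eps -> exists delta, 0 < delta /\
    forall u' r' s' p', D u' r' s' p' ->
      Rabs (u' - u) < delta -> Rabs (r' - r) < delta ->
      Rabs (s' - s) < delta -> Rabs (p' - p) < delta ->
      Rabs (F u' r' s' p' - F u r s p) < eps.

(* g : R -> R restricted to the increments t with (point + t e_i) in D has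
   derivative d at t = 0 (one-sided at the boundary of D). *)
Definition deriv_within (ok : R -> Prop) (g : R -> R) (d : R) : Prop :=
  forall eps, 0 < eps -> exists delta, 0 < delta /\
    forall t, t <> 0 -> Rabs t < delta -> ok t ->
      Rabs ((g t - g 0) / t - d) < eps.

Definition C1_on (D : Dom) (F Fu Fr Fs Fp : F4) : Prop :=
  cont_on D F /\ cont_on D Fu /\ cont_on D Fr /\ cont_on D Fs /\ cont_on D Fp /\
  forall u r s p, D u r s p ->
    deriv_within (fun t => D (u + t) r s p) (fun t => F (u + t) r s p) (Fu u r s p) /\
    deriv_within (fun t => D u (r + t) s p) (fun t => F u (r + t) s p) (Fr u r s p) /\
    deriv_within (fun t => D u r (s + t) p) (fun t => F u r (s + t) p) (Fs u r s p) /\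
    deriv_within (fun t => D u r s (p + t)) (fun t => F u r s (p + t)) (Fp u r s p).

Definition periodic_phi (D : Dom) (F : F4) : Prop :=
  forall u r s p, D u r s p -> F u r s (p + 2 * PI) = F u r s p.

Definition int3 (a b : R) (G : R -> R -> R -> R) : R :=
  RInt (fun x => RInt (fun s => RInt (fun p => G x s p) 0 (2 * PI)) (-1) 1) a b.

(* ||v||_T^2 : integral over Sigma_T = {u + r = T + r0}. *)
Definition normT2 (r0 T : R) (R_ P Q : F4) : R :=
  int3 r0 (T + r0) (fun r s p =>
    R_ (T + r0 - r) r s p ^ 2 + P (T + r0 - r) r s p ^ 2 + Q (T + r0 - r) r s p ^ 2).

Definition int_Sigma_u (r0 T : R) (R_ : F4) : R :=
  int3 r0 (T + r0) (fun r s p => R_ 0 r s p ^ 2).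

Definition int_Sigma_r (r0 T : R) (P Q : F4) : R :=
  int3 0 T (fun u s p => P u r0 s p ^ 2 + Q u r0 s p ^ 2).

(* Multiplying the equations by [R], [P], [Q] and adding gives, pointwise,
     2 R R_u - R R_r + P P_r + Q Q_r + (P^2 + Q^2) / r
       = d/ds (sqrt (1 - s^2) R P) / r + d/dphi (R Q) / (r sqrt (1 - s^2)).
   Over the unit sphere the right side integrates to 0 (the [s]-boundary terms vanish at [s = +-1],
   the [phi]-terms by periodicity), so the sphere integrals [E_R] of [R^2] and [E_PQ] of [P^2 + Q^2]
   satisfy [d/du E_R <= (d/dr E_R - d/dr E_PQ) / 2].  Integrated over the characteristic triangle
   [u >= 0, r >= r0, u + r <= T + r0], the left side gives the [R]-energy on [Sigma_T] minus that on
   [Sigma_u], the right side half the [(R^2 - P^2 - Q^2)]-energy on [Sigma_T] minus that on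
   [Sigma_r]; rearranging,
     ||v||_T^2 <= 2 int_{Sigma_u} R^2 - int_{Sigma_r} R^2 + int_{Sigma_r} (P^2 + Q^2). *)

From Stdlib Require Import Reals Lra IndefiniteDescription.
From Coquelicot Require Import Coquelicot.
Open Scope R_scope.

Lemma Rabs_plus_lt a b e1 e2 : Rabs a < e1 -> Rabs b < e2 -> Rabs (a + b) < e1 + e2.
Proof. intros; pose proof (Rabs_triang a b); lra. Qed.

Lemma Rabs_minus_lt a b e1 e2 : Rabs a < e1 -> Rabs b < e2 -> Rabs (a - b) < e1 + e2.
Proof. intros; pose proof (Rabs_triang a (- b)); rewrite Rabs_Ropp in *; unfold Rminus; lra. Qed.

Lemma Rmult_div_succ_lt A e : 0 <= A -> 0 < e -> A * (e / (A + 1)) < e.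
Proof.
  intros. assert (e / (A + 1) * (A + 1) = e) by (field; lra).
  assert (0 < e / (A + 1)) by (apply Rdiv_lt_0_compat; lra). nra.
Qed.

Lemma ball_in_interval a b x y : Rabs (y - x) < Rmin (x - a) (b - x) -> a < y < b.
Proof.
  pose proof (Rmin_l (x - a) (b - x)); pose proof (Rmin_r (x - a) (b - x)).
  unfold Rabs; destruct Rcase_abs; intros; lra.
Qed.

Lemma continuity_pt_ball (g : R -> R) x :
  continuity_pt g x <-> forall eps, 0 < eps -> exists del, 0 < del /\
    forall y, Rabs (y - x) < del -> Rabs (g y - g x) < eps.
Proof.
  split; intros H eps He; destruct (H eps He) as [del [Hdel Hy]]; exists del; split; auto.
  - intros y Hyx. destruct (Req_dec y x) as [->|Hne].
    + rewrite Rminus_diag, Rabs_R0; auto.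
    + apply (Hy y). repeat split; auto.
  - intros y [_ Hyx]. exact (Hy y Hyx).
Qed.

Definition cont_Icc (a b : R) (g : R -> R) : Prop :=
  forall x, a <= x <= b -> forall eps, 0 < eps -> exists del, 0 < del /\
    forall y, a <= y <= b -> Rabs (y - x) < del -> Rabs (g y - g x) < eps.

Lemma cont_Icc_continuity_pt a b g :
  (forall x, a <= x <= b -> continuity_pt g x) -> cont_Icc a b g.
Proof.
  intros H x Hx eps He. destruct (proj1 (continuity_pt_ball g x) (H x Hx) eps He) as [d [Hd Hd']].
  exists d; split; auto.
Qed.

Lemma cont_Icc_const a b c : cont_Icc a b (fun _ => c).
Proof. intros x _ eps He. exists 1; split; [lra|]. intros. rewrite Rminus_diag, Rabs_R0; auto. Qed.

Definition cont_op2 (op : R -> R -> R) := forall a b eps, 0 < eps -> exists del, 0 < del /\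
  forall x y, Rabs (x - a) < del -> Rabs (y - b) < del -> Rabs (op x y - op a b) < eps.

Lemma cont_op2_plus : cont_op2 Rplus.
Proof.
  intros a b eps He. exists (eps / 2); split; [lra|]. intros x y H1 H2.
  replace (x + y - (a + b)) with ((x - a) + (y - b)) by ring.
  replace eps with (eps / 2 + eps / 2) by field. apply Rabs_plus_lt; auto.
Qed.

Lemma cont_op2_minus : cont_op2 Rminus.
Proof.
  intros a b eps He. exists (eps / 2); split; [lra|]. intros x y H1 H2.
  replace (x - y - (a - b)) with ((x - a) - (y - b)) by ring.
  replace eps with (eps / 2 + eps / 2) by field. apply Rabs_minus_lt; auto.
Qed.

Lemma cont_op2_mult : cont_op2 Rmult.
Proof.
  intros a b eps He.
  set (M := Rabs a + Rabs b + 1).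
  assert (HM : 1 <= M) by (unfold M; pose proof (Rabs_pos a); pose proof (Rabs_pos b); lra).
  set (d := Rmin 1 (eps / (2 * M))).
  assert (Hd1 : d <= 1) by apply Rmin_l.
  assert (Hd2 : d <= eps / (2 * M)) by apply Rmin_r.
  exists d. split; [apply Rmin_pos; [lra | apply Rdiv_lt_0_compat; lra]|].
  intros x y H1 H2.
  replace (x * y - a * b) with ((x - a) * y + a * (y - b)) by ring.
  eapply Rle_lt_trans; [apply Rabs_triang|]. rewrite !Rabs_mult.
  assert (Hy : Rabs y <= Rabs b + 1).
  { pose proof (Rabs_triang (y - b) b). replace (y - b + b) with y in H by ring. lra. }
  assert (Hdm : d * M <= eps / 2).
  { apply Rle_trans with (eps / (2 * M) * M); [apply Rmult_le_compat_r; lra | right; field; lra]. }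
  pose proof (Rabs_pos (x - a)); pose proof (Rabs_pos (y - b)); pose proof (Rabs_pos a);
    pose proof (Rabs_pos y).
  assert (Rabs (x - a) * Rabs y <= d * (Rabs b + 1)) by (apply Rmult_le_compat; lra).
  assert (Rabs a * Rabs (y - b) <= Rabs a * d) by (apply Rmult_le_compat_l; lra).
  unfold M in Hdm. nra.
Qed.

Lemma cont_Icc_op2 a b op f g :
  cont_op2 op -> cont_Icc a b f -> cont_Icc a b g -> cont_Icc a b (fun x => op (f x) (g x)).
Proof.
  intros Hop Hf Hg x Hx eps He.
  destruct (Hop (f x) (g x) eps He) as [d [Hd0 Hd1]].
  destruct (Hf x Hx d Hd0) as [d1 [Hd1p Hd1']].
  destruct (Hg x Hx d Hd0) as [d2 [Hd2p Hd2']].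
  exists (Rmin d1 d2); split; [apply Rmin_pos; auto|].
  intros y Hy Hyx. apply Hd1.
  - apply Hd1'; auto; eapply Rlt_le_trans; eauto; apply Rmin_l.
  - apply Hd2'; auto; eapply Rlt_le_trans; eauto; apply Rmin_r.
Qed.

(* Composing with the retraction [clamp a b] of [R] onto [a, b] extends a function continuous
   on [a, b] to one continuous on [R]. *)
Definition clamp (a b x : R) := Rmax a (Rmin b x).

Lemma clamp_in a b x : a <= b -> a <= clamp a b x <= b.
Proof. intros; unfold clamp, Rmax, Rmin; repeat destruct Rle_dec; lra. Qed.

Lemma clamp_id a b x : a <= x <= b -> clamp a b x = x.
Proof. intros; unfold clamp, Rmax, Rmin; repeat destruct Rle_dec; lra. Qed.

Lemma clamp_lip a b x y : a <= b -> Rabs (clamp a b x - clamp a b y) <= Rabs (x - y).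
Proof.
  intros; unfold clamp, Rmax, Rmin; repeat destruct Rle_dec; unfold Rabs; repeat destruct Rcase_abs; lra.
Qed.

Lemma clamp_lip2 a b b' x x' : a <= b -> a <= b' ->
  Rabs (clamp a b' x' - clamp a b x) <= Rabs (b' - b) + Rabs (x' - x).
Proof.
  intros; unfold clamp, Rmax, Rmin; repeat destruct Rle_dec; unfold Rabs; repeat destruct Rcase_abs; lra.
Qed.

Lemma continuity_pt_clamp a b g x :
  a <= b -> cont_Icc a b g -> continuity_pt (fun y => g (clamp a b y)) x.
Proof.
  intros Hab Hg. apply continuity_pt_ball. intros eps He.
  destruct (Hg (clamp a b x) (clamp_in a b x Hab) eps He) as [d [Hd Hd']].
  exists d; split; auto. intros y Hy. apply Hd'; [apply clamp_in; auto|].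
  eapply Rle_lt_trans; [apply clamp_lip; auto | exact Hy].
Qed.

Lemma ex_RInt_cont_Icc a b g : a <= b -> cont_Icc a b g -> ex_RInt g a b.
Proof.
  intros Hab Hg. apply ex_RInt_ext with (fun y => g (clamp a b y)).
  - intros x Hx. rewrite Rmin_left, Rmax_right in Hx by lra. rewrite clamp_id; auto; lra.
  - apply (ex_RInt_continuous (V := R_CompleteNormedModule)). intros.
    apply continuity_pt_filterlim, continuity_pt_clamp; auto.
Qed.

(* [RInt] is valued in a [CompleteNormedModule]; this exposes equations to [ring]/[field] at type [R]. *)
Ltac R_ring := match goal with |- ?x = ?y => change (@eq R x y) end; ring.
Ltac R_field := match goal with |- ?x = ?y => change (@eq R x y) end; field.

Lemma RInt_Rplus (f g : R -> R) a b : ex_RInt f a b -> ex_RInt g a b ->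
  RInt (fun x => f x + g x) a b = RInt f a b + RInt g a b.
Proof. exact (RInt_plus f g a b). Qed.

Lemma RInt_Rminus (f g : R -> R) a b : ex_RInt f a b -> ex_RInt g a b ->
  RInt (fun x => f x - g x) a b = RInt f a b - RInt g a b.
Proof. exact (RInt_minus f g a b). Qed.

Lemma RInt_Rmult_l (f : R -> R) c a b : ex_RInt f a b ->
  RInt (fun x => c * f x) a b = c * RInt f a b.
Proof. exact (RInt_scal f a b c). Qed.

Lemma ex_RInt_Rplus (f g : R -> R) a b : ex_RInt f a b -> ex_RInt g a b ->
  ex_RInt (fun x => f x + g x) a b.
Proof. exact (ex_RInt_plus f g a b). Qed.

Lemma ex_RInt_Rminus (f g : R -> R) a b : ex_RInt f a b -> ex_RInt g a b ->
  ex_RInt (fun x => f x - g x) a b.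
Proof. exact (ex_RInt_minus f g a b). Qed.

Lemma ex_RInt_Rmult_l (f : R -> R) c a b : ex_RInt f a b -> ex_RInt (fun x => c * f x) a b.
Proof. exact (ex_RInt_scal f a b c). Qed.

Lemma RInt_lin_comb3 (f g h : R -> R) a b c x y :
  ex_RInt f x y -> ex_RInt g x y -> ex_RInt h x y ->
  RInt (fun t => a * f t + b * g t + c * h t) x y = a * RInt f x y + b * RInt g x y + c * RInt h x y.
Proof.
  intros Hf Hg Hh.
  assert (Haf := ex_RInt_Rmult_l f a x y Hf).
  assert (Hbg := ex_RInt_Rmult_l g b x y Hg).
  assert (Hch := ex_RInt_Rmult_l h c x y Hh).
  assert (Hafbg := ex_RInt_Rplus _ _ x y Haf Hbg).
  rewrite (RInt_Rplus _ _ x y Hafbg Hch), (RInt_Rplus _ _ x y Haf Hbg).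
  rewrite (RInt_Rmult_l f a x y Hf), (RInt_Rmult_l g b x y Hg), (RInt_Rmult_l h c x y Hh).
  reflexivity.
Qed.

Lemma is_derive_Rconst (c x : R) : is_derive (fun _ => c) x 0.
Proof. exact (is_derive_const (K := R_AbsRing) (V := R_NormedModule) c x). Qed.

Lemma is_derive_Rid (x : R) : is_derive (fun z => z) x 1.
Proof. exact (is_derive_id (K := R_AbsRing) x). Qed.

Lemma is_derive_Rplus (f g : R -> R) x df dg : is_derive f x df -> is_derive g x dg ->
  is_derive (fun t => f t + g t) x (df + dg).
Proof. exact (is_derive_plus (K := R_AbsRing) (V := R_NormedModule) f g x df dg). Qed.

Lemma is_derive_Rminus (f g : R -> R) x df dg : is_derive f x df -> is_derive g x dg ->
  is_derive (fun t => f t - g t) x (df - dg).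
Proof. exact (is_derive_minus (K := R_AbsRing) (V := R_NormedModule) f g x df dg). Qed.

Lemma is_derive_Rsqr (f : R -> R) x df : is_derive f x df ->
  is_derive (fun t => f t ^ 2) x (2 * f x * df).
Proof.
  intros Hf. replace (2 * f x * df) with (INR 2 * df * f x ^ Nat.pred 2) by (simpl; ring).
  exact (is_derive_pow f 2 x df Hf).
Qed.

Lemma is_derive_val (f : R -> R) x l l' : is_derive f x l -> l = l' -> is_derive f x l'.
Proof. now intros H <-. Qed.

Lemma continuity_pt_is_derive (f : R -> R) x l : is_derive f x l -> continuity_pt f x.
Proof.
  intros H. apply continuity_pt_filterlim.
  apply (ex_derive_continuous (K := R_AbsRing) (V := R_NormedModule) f). eexists; exact H.
Qed.

Lemma Rabs_RInt_le_const (f : R -> R) a b M : ex_RInt f a b ->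
  (forall t, Rmin a b <= t <= Rmax a b -> Rabs (f t) <= M) ->
  Rabs (RInt f a b) <= Rabs (b - a) * M.
Proof.
  intros Hex Hb. destruct (Rle_dec a b).
  - rewrite (Rabs_right (b - a)) by lra. apply abs_RInt_le_const; auto.
    intros; apply Hb; rewrite Rmin_left, Rmax_right; lra.
  - rewrite <- (opp_RInt_swap f b a) by (apply ex_RInt_swap; auto).
    change (Rabs (- RInt f b a) <= Rabs (b - a) * M).
    rewrite Rabs_Ropp, (Rabs_left (b - a)) by lra. replace (- (b - a)) with (a - b) by ring.
    apply abs_RInt_le_const; [lra | apply ex_RInt_swap; auto |].
    intros; apply Hb; rewrite Rmin_right, Rmax_left; lra.
Qed.

Lemma cont_Icc_derive_0 a b Phi : a <= b -> cont_Icc a b Phi ->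
  (forall x, a < x < b -> is_derive Phi x 0) -> Phi b = Phi a.
Proof.
  intros Hab HPhi H0.
  set (Pt := fun x => Phi (clamp a b x)).
  destruct (MVT_gen Pt a b (fun _ => 0)) as [c [_ Hc]].
  - intros x Hx. rewrite Rmin_left, Rmax_right in Hx by lra.
    apply is_derive_ext_loc with Phi; [|exact (H0 x Hx)].
    assert (Hp : 0 < Rmin (x - a) (b - x)) by (apply Rmin_pos; lra).
    exists (mkposreal _ Hp). intros y Hy. apply ball_in_interval in Hy.
    unfold Pt. rewrite clamp_id; lra.
  - intros x _; apply continuity_pt_clamp; auto.
  - unfold Pt in Hc. rewrite !clamp_id in Hc by lra. lra.
Qed.

Lemma RInt_derive_Icc (g d : R -> R) a b : a <= b -> cont_Icc a b g -> cont_Icc a b d ->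
  (forall x, a < x < b -> is_derive g x (d x)) -> RInt d a b = g b - g a.
Proof.
  intros Hab Hg Hd Hder.
  set (dt := fun y => d (clamp a b y)).
  assert (Hdt : forall x, continuity_pt dt x) by (intros; apply continuity_pt_clamp; auto).
  assert (Hex : forall u v, ex_RInt dt u v).
  { intros; apply (ex_RInt_continuous (V := R_CompleteNormedModule)).
    intros; apply continuity_pt_filterlim; auto. }
  set (I := fun x => RInt dt a x).
  assert (HI : forall x, is_derive I x (dt x)).
  { intros x. apply is_derive_RInt with a; [|apply continuity_pt_filterlim; auto].
    apply filter_forall. intros; apply RInt_correct; auto. }
  assert (Ib : RInt d a b = I b).
  { apply RInt_ext. intros x Hx. rewrite Rmin_left, Rmax_right in Hx by lra.
    unfold dt; rewrite clamp_id; lra. }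
  assert (Ia : I a = 0) by exact (RInt_point a dt).
  assert (HgI : cont_Icc a b (fun x => g x - I x)).
  { apply (cont_Icc_op2 _ _ Rminus); [apply cont_op2_minus | exact Hg |].
    apply cont_Icc_continuity_pt. intros x _. apply (continuity_pt_is_derive _ _ _ (HI x)). }
  assert (Hconst := cont_Icc_derive_0 a b (fun x => g x - I x) Hab HgI).
  rewrite Ib. enough (g b - I b = g a - I a) by lra.
  apply Hconst. intros x Hx.
  apply (is_derive_val _ _ _ _ (is_derive_Rminus g I x _ _ (Hder x Hx) (HI x))).
  unfold dt; rewrite clamp_id; lra.
Qed.

(* Pointwise joint continuity becomes uniform in [t] on the compact [a, b]. *)
Lemma cont_param_unif {P : Type} (dist : P -> P -> R) (ok : P -> Prop) (F : P -> R -> R)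
    (a b : R) (p0 : P) :
  ok p0 -> (forall d, 0 < d -> dist p0 p0 < d) ->
  (forall t, a <= t <= b -> forall eps, 0 < eps -> exists del, 0 < del /\
     forall p t', ok p -> a <= t' <= b -> dist p0 p < del -> Rabs (t' - t) < del ->
       Rabs (F p t' - F p0 t) < eps) ->
  forall eps, 0 < eps -> exists del, 0 < del /\
     forall p t, ok p -> a <= t <= b -> dist p0 p < del -> Rabs (F p t - F p0 t) < eps.
Proof.
  intros Hok Hd0 Hc eps He.
  assert (Hex : forall t, exists d : posreal, a <= t <= b -> forall p t', ok p -> a <= t' <= b ->
     dist p0 p < d -> Rabs (t' - t) < d -> Rabs (F p t' - F p0 t) < eps / 2).
  { intros t. destruct (Rle_dec a t) as [H1|H1]; [destruct (Rle_dec t b) as [H2|H2]|].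
    - destruct (Hc t (conj H1 H2) (eps / 2)) as [d [Hd Hd']]; [lra|].
      exists (mkposreal d Hd); intros _; exact Hd'.
    - exists (mkposreal 1 Rlt_0_1); intros; lra.
    - exists (mkposreal 1 Rlt_0_1); intros; lra. }
  set (delta := fun t => proj1_sig (constructive_indefinite_description _ (Hex t))).
  assert (Hdelta : forall t, a <= t <= b -> forall p t', ok p -> a <= t' <= b ->
     dist p0 p < delta t -> Rabs (t' - t) < delta t -> Rabs (F p t' - F p0 t) < eps / 2).
  { intros t. exact (proj2_sig (constructive_indefinite_description _ (Hex t))). }
  destruct (compactness_value_1d a b delta) as [d Hd].
  exists d; split; [apply cond_pos|].
  intros p t Hp Ht Hdp.
  destruct (Rlt_dec (Rabs (F p t - F p0 t)) eps) as [Hl|Hl]; [exact Hl|exfalso].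
  apply (Hd t Ht). intros [t1 [Ht1 [Htt1 Hdt1]]].
  apply Hl.
  assert (A1 := Hdelta t1 Ht1 p t Hp Ht (Rlt_le_trans _ _ _ Hdp Hdt1) Htt1).
  assert (A2 := Hdelta t1 Ht1 p0 t Hok Ht (Hd0 _ (cond_pos _)) Htt1).
  replace (F p t - F p0 t) with ((F p t - F p0 t1) - (F p0 t - F p0 t1)) by ring.
  replace eps with (eps / 2 + eps / 2) by field. apply Rabs_minus_lt; auto.
Qed.

Lemma RInt_param_cont {P : Type} (dist : P -> P -> R) (ok : P -> Prop) (F : P -> R -> R)
    (a b : R) (p0 : P) :
  (forall eps, 0 < eps -> exists del, 0 < del /\ forall p t, ok p ->
     Rmin a b <= t <= Rmax a b -> dist p0 p < del -> Rabs (F p t - F p0 t) < eps) ->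
  (forall p, ok p -> ex_RInt (F p) a b) -> ok p0 ->
  forall eps, 0 < eps -> exists del, 0 < del /\ forall p, ok p -> dist p0 p < del ->
     Rabs (RInt (F p) a b - RInt (F p0) a b) < eps.
Proof.
  intros Heq Hex Hok eps He.
  pose proof (Rabs_pos (b - a)).
  destruct (Heq (eps / (Rabs (b - a) + 1))) as [d [Hd Hd']]; [apply Rdiv_lt_0_compat; lra|].
  exists d; split; auto. intros p Hp Hdp.
  rewrite <- RInt_Rminus by auto.
  eapply Rle_lt_trans.
  - apply Rabs_RInt_le_const with (M := eps / (Rabs (b - a) + 1)).
    + apply ex_RInt_Rminus; auto.
    + intros t Ht; left; apply Hd'; auto.
  - apply Rmult_div_succ_lt; auto.
Qed.

Lemma Rabs_diff_quotient_le (f df : R -> R) x0 h e : h <> 0 ->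
  (forall c, Rmin x0 (x0 + h) <= c <= Rmax x0 (x0 + h) -> is_derive f c (df c)) ->
  (forall c, Rmin x0 (x0 + h) <= c <= Rmax x0 (x0 + h) -> Rabs (df c - df x0) <= e) ->
  Rabs (/ h * (f (x0 + h) - f x0) - df x0) <= e.
Proof.
  intros Hh Hd He.
  destruct (MVT_gen f x0 (x0 + h) df) as [c [Hc Hmvt]].
  - intros x Hx. apply Hd; lra.
  - intros x Hx. exact (continuity_pt_is_derive _ _ _ (Hd x Hx)).
  - simpl in Hmvt. rewrite Hmvt.
    replace (/ h * (df c * (x0 + h - x0)) - df x0) with (df c - df x0) by (field; auto).
    apply He; exact Hc.
Qed.

Lemma is_derive_RInt_param_unif (F Fx : R -> R -> R) a b x0 eta :
  a <= b -> 0 < eta ->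
  (forall x t, Rabs (x - x0) < eta -> a <= t <= b -> is_derive (fun z => F z t) x (Fx x t)) ->
  (forall x, Rabs (x - x0) < eta -> ex_RInt (F x) a b) ->
  ex_RInt (Fx x0) a b ->
  (forall eps, 0 < eps -> exists del, 0 < del /\ forall x t, Rabs (x - x0) < eta ->
     Rabs (x - x0) < del -> a <= t <= b -> Rabs (Fx x t - Fx x0 t) < eps) ->
  is_derive (fun x => RInt (F x) a b) x0 (RInt (Fx x0) a b).
Proof.
  intros Hab Heta Hd Hex Hexd Heq.
  apply is_derive_Reals. intros eps He.
  set (e' := eps / (b - a + 1)).
  assert (He' : 0 < e') by (unfold e'; apply Rdiv_lt_0_compat; lra).
  destruct (Heq e' He') as [d [Hdpos Hd']].
  exists (mkposreal (Rmin d eta) (Rmin_pos _ _ Hdpos Heta)). simpl. intros h Hh0 Hh.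
  pose proof (Rmin_l d eta); pose proof (Rmin_r d eta).
  assert (Hbetween : forall c, Rmin x0 (x0 + h) <= c <= Rmax x0 (x0 + h) ->
                       Rabs (c - x0) < eta /\ Rabs (c - x0) < d).
  { intros c; unfold Rmin, Rmax; destruct Rle_dec; intros;
      unfold Rabs in *; repeat destruct Rcase_abs; lra. }
  assert (Hex0 : ex_RInt (F x0) a b) by (apply Hex; rewrite Rminus_diag, Rabs_R0; auto).
  assert (Hexh : ex_RInt (F (x0 + h)) a b) by (apply Hex; replace (x0 + h - x0) with h by ring; lra).
  assert (Hexq : ex_RInt (fun t => / h * (F (x0 + h) t - F x0 t)) a b)
    by (apply (ex_RInt_Rmult_l (fun t => F (x0 + h) t - F x0 t)), ex_RInt_Rminus; auto).
  replace ((RInt (F (x0 + h)) a b - RInt (F x0) a b) / h - RInt (Fx x0) a b)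
    with (RInt (fun t => / h * (F (x0 + h) t - F x0 t) - Fx x0 t) a b).
  2:{ rewrite (RInt_Rminus (fun t => / h * (F (x0 + h) t - F x0 t))) by auto.
      rewrite (RInt_Rmult_l (fun t => F (x0 + h) t - F x0 t)) by (apply ex_RInt_Rminus; auto).
      rewrite RInt_Rminus by auto. R_field; auto. }
  eapply Rle_lt_trans.
  - apply abs_RInt_le_const with (M := e'); auto.
    + apply (ex_RInt_Rminus (fun t => / h * (F (x0 + h) t - F x0 t)) (Fx x0)); auto.
    + intros t Ht. apply (Rabs_diff_quotient_le (fun z => F z t) (fun z => Fx z t)); auto.
      * intros c Hc. apply Hd; [apply Hbetween | ]; auto.
      * intros c Hc. left. apply Hd'; [apply Hbetween | apply Hbetween | ]; auto.
  - unfold e'. apply Rmult_div_succ_lt; lra.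
Qed.

Definition cont2 (H : R -> R -> R) : Prop :=
  forall x y eps, 0 < eps -> exists del, 0 < del /\ forall x' y',
    Rabs (x' - x) < del -> Rabs (y' - y) < del -> Rabs (H x' y' - H x y) < eps.

Lemma cont2_continuity_pt H x y : cont2 H -> continuity_pt (H x) y.
Proof.
  intros Hc. apply continuity_pt_ball. intros eps He. destruct (Hc x y eps He) as [d [Hd Hd']].
  exists d; split; auto. intros; apply Hd'; auto. rewrite Rminus_diag, Rabs_R0; auto.
Qed.

Lemma ex_RInt_cont2 H x u v : cont2 H -> ex_RInt (H x) u v.
Proof.
  intros Hc. apply (ex_RInt_continuous (V := R_CompleteNormedModule)).
  intros; apply continuity_pt_filterlim, cont2_continuity_pt; auto.
Qed.

Lemma cont2_unif H x0 a b : cont2 H -> forall eps, 0 < eps -> exists del, 0 < del /\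
  forall x t, Rabs (x - x0) < del -> a <= t <= b -> Rabs (H x t - H x0 t) < eps.
Proof.
  intros Hc eps He.
  destruct (cont_param_unif (fun p q => Rabs (q - p)) (fun _ => True) H a b x0 I) with (eps := eps)
    as [d [Hd Hd']]; auto.
  - intros; rewrite Rminus_diag, Rabs_R0; auto.
  - intros t Ht e He'. destruct (Hc x0 t e He') as [d [Hd Hd']]. exists d; split; auto.
  - exists d; split; auto.
Qed.

Lemma cont2_comp (G f g : R -> R -> R) : cont2 G ->
  (forall x y x' y', Rabs (f x' y' - f x y) <= Rabs (x' - x) + Rabs (y' - y)) ->
  (forall x y x' y', Rabs (g x' y' - g x y) <= Rabs (x' - x) + Rabs (y' - y)) ->
  cont2 (fun x y => G (f x y) (g x y)).
Proof.
  intros Hc Hf Hg x y eps He. destruct (Hc (f x y) (g x y) eps He) as [d [Hd Hd']].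
  exists (d / 2); split; [lra|]. intros x' y' H1 H2. apply Hd'.
  - specialize (Hf x y x' y'); lra.
  - specialize (Hg x y x' y'); lra.
Qed.

Lemma lip_snd x y x' y' : Rabs (y' - y) <= Rabs (x' - x) + Rabs (y' - y).
Proof. pose proof (Rabs_pos (x' - x)); lra. Qed.

Lemma lip_diff x y x' y' : Rabs ((x' - y') - (x - y)) <= Rabs (x' - x) + Rabs (y' - y).
Proof.
  replace ((x' - y') - (x - y)) with ((x' - x) + - (y' - y)) by ring.
  eapply Rle_trans; [apply Rabs_triang|]. rewrite Rabs_Ropp; lra.
Qed.

Lemma cont2_RInt_upper H a : cont2 H -> cont2 (fun x y => RInt (H x) a y).
Proof.
  intros Hc x0 y0 eps He.
  destruct (Hc x0 y0 1 Rlt_0_1) as [d1 [Hd1 Hd1']].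
  set (M := Rabs (H x0 y0) + 1).
  assert (HM : 0 < M) by (unfold M; pose proof (Rabs_pos (H x0 y0)); lra).
  pose proof (Rabs_pos (y0 - a)).
  destruct (cont2_unif H x0 (Rmin a y0) (Rmax a y0) Hc (eps / 2 / (Rabs (y0 - a) + 1)))
    as [d2 [Hd2 Hd2']]; [apply Rdiv_lt_0_compat; lra|].
  assert (Hd3 : 0 < eps / 2 / (M + 1)) by (apply Rdiv_lt_0_compat; lra).
  exists (Rmin d1 (Rmin d2 (eps / 2 / (M + 1)))).
  split; [repeat apply Rmin_pos; auto|].
  intros x y Hx Hy.
  pose proof (Rmin_l d1 (Rmin d2 (eps / 2 / (M + 1)))).
  pose proof (Rmin_r d1 (Rmin d2 (eps / 2 / (M + 1)))).
  pose proof (Rmin_l d2 (eps / 2 / (M + 1))); pose proof (Rmin_r d2 (eps / 2 / (M + 1))).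
  rewrite <- (RInt_Chasles (H x) a y0 y) by (apply ex_RInt_cont2; auto).
  change (Rabs (RInt (H x) a y0 + RInt (H x) y0 y - RInt (H x0) a y0) < eps).
  replace (RInt (H x) a y0 + RInt (H x) y0 y - RInt (H x0) a y0) with
    ((RInt (H x) a y0 - RInt (H x0) a y0) + RInt (H x) y0 y) by ring.
  replace eps with (eps / 2 + eps / 2) by field.
  apply Rabs_plus_lt.
  - rewrite <- RInt_Rminus by (apply ex_RInt_cont2; auto).
    eapply Rle_lt_trans.
    + apply Rabs_RInt_le_const with (M := eps / 2 / (Rabs (y0 - a) + 1)).
      * apply ex_RInt_Rminus; apply ex_RInt_cont2; auto.
      * intros t Ht. left. apply Hd2'; auto; lra.
    + apply Rmult_div_succ_lt; lra.
  - eapply Rle_lt_trans.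
    + apply Rabs_RInt_le_const with (M := M); [apply ex_RInt_cont2; auto|].
      intros t Ht.
      assert (Hyd1 : Rabs (y - y0) < d1) by lra.
      assert (Htd : Rabs (t - y0) < d1).
      { clear - Ht Hyd1. revert Ht Hyd1; unfold Rmin, Rmax; destruct Rle_dec; intros; unfold Rabs in *;
          repeat destruct Rcase_abs; lra. }
      assert (Hxt := Hd1' x t ltac:(lra) Htd).
      pose proof (Rabs_triang (H x t - H x0 y0) (H x0 y0)) as Htri.
      replace (H x t - H x0 y0 + H x0 y0) with (H x t) in Htri by ring. unfold M; lra.
    + pose proof (Rabs_pos (y - y0)).
      apply Rle_lt_trans with (eps / 2 / (M + 1) * M).
      * apply Rmult_le_compat_r; lra.
      * rewrite Rmult_comm. apply Rmult_div_succ_lt; lra.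
Qed.

Lemma is_derive_RInt_upper (H : R -> R -> R) x a t c : cont2 H ->
  is_derive (fun z => RInt (H x) a (z - t)) c (H x (c - t)).
Proof.
  intros Hc.
  assert (Dint : is_derive (fun y => RInt (H x) a y) (c - t) (H x (c - t))).
  { apply (is_derive_RInt (V := R_CompleteNormedModule) (H x) (fun y => RInt (H x) a y) a).
    - apply filter_forall. intros; apply (RInt_correct (V := R_CompleteNormedModule)), ex_RInt_cont2; auto.
    - apply continuity_pt_filterlim, cont2_continuity_pt; auto. }
  assert (Dlin : is_derive (fun z => z - t) c 1).
  { apply (is_derive_val _ _ _ _ (is_derive_Rminus _ _ c _ _ (is_derive_Rid c) (is_derive_Rconst t c))).
    R_ring. }
  apply (is_derive_val _ _ _ _ (is_derive_comp _ _ c _ _ Dint Dlin)).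
  apply (scal_one (V := R_NormedModule)).
Qed.

Lemma is_derive_RInt_moving_end (F : R -> R -> R) k c0 : cont2 F ->
  is_derive (fun c => RInt (F c) (c0 + k) (c + k)) c0 (F c0 (c0 + k)).
Proof.
  intros Hc. apply is_derive_Reals. intros eps He.
  destruct (Hc c0 (c0 + k) (eps / 2)) as [d [Hd Hd']]; [lra|].
  exists (mkposreal d Hd). simpl. intros h Hh0 Hh.
  assert (Hcst : ex_RInt (fun _ => F c0 (c0 + k)) (c0 + k) (c0 + h + k)).
  { apply (ex_RInt_continuous (V := R_CompleteNormedModule)).
    intros; apply continuity_pt_filterlim, continuity_pt_const. intros u v; auto. }
  rewrite (RInt_point (c0 + k) (F c0)). change (zero : R_CompleteNormedModule) with 0.
  replace ((RInt (F (c0 + h)) (c0 + k) (c0 + h + k) - 0) / h - F c0 (c0 + k)) with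
    (/ h * RInt (fun t => F (c0 + h) t - F c0 (c0 + k)) (c0 + k) (c0 + h + k)).
  2:{ rewrite (RInt_Rminus _ _ _ _ (ex_RInt_cont2 F (c0 + h) _ _ Hc) Hcst), RInt_const.
      change (scal ?x ?y) with (x * y). R_field; auto. }
  rewrite Rabs_mult, Rabs_inv by auto.
  assert (0 < Rabs h) by (apply Rabs_pos_lt; auto).
  apply Rle_lt_trans with (/ Rabs h * (Rabs h * (eps / 2))); [|field_simplify; lra].
  apply Rmult_le_compat_l; [left; apply Rinv_0_lt_compat; auto|].
  replace (Rabs h) with (Rabs (c0 + h + k - (c0 + k))) by (f_equal; ring).
  apply Rabs_RInt_le_const.
  - apply ex_RInt_Rminus; [apply ex_RInt_cont2; auto | exact Hcst].
  - intros t Ht. left. apply Hd'.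
    + replace (c0 + h - c0) with h by ring; auto.
    + revert Ht Hh; unfold Rmin, Rmax; destruct Rle_dec; intros; unfold Rabs in *;
        repeat destruct Rcase_abs; lra.
Qed.

Lemma is_derive_RInt_param_upper (F Fx : R -> R -> R) a k c0 :
  a <= c0 + k -> cont2 F -> (forall c t, is_derive (fun z => F z t) c (Fx c t)) -> cont2 Fx ->
  is_derive (fun c => RInt (F c) a (c + k)) c0 (RInt (Fx c0) a (c0 + k) + F c0 (c0 + k)).
Proof.
  intros Ha Hc Hd Hcx.
  apply is_derive_ext with (fun c => RInt (F c) a (c0 + k) + RInt (F c) (c0 + k) (c + k)).
  { intros c. apply (RInt_Chasles (F c)); apply ex_RInt_cont2; auto. }
  apply is_derive_Rplus; [|apply is_derive_RInt_moving_end; auto].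
  apply is_derive_RInt_param_unif with (eta := 1); auto; try lra.
  - intros; apply ex_RInt_cont2; auto.
  - apply ex_RInt_cont2; auto.
  - intros eps He. destruct (cont2_unif Fx c0 a (c0 + k) Hcx eps He) as [d [Hd1 Hd2]].
    exists d; split; auto.
Qed.

Lemma RInt_reflect (h : R -> R) a c : ex_RInt h 0 (c - a) ->
  RInt (fun r => h (c - r)) a c = RInt h 0 (c - a).
Proof.
  intros Hex.
  assert (Hex' : ex_RInt h (-1 * a + c) (-1 * c + c)).
  { replace (-1 * a + c) with (c - a) by ring. replace (-1 * c + c) with 0 by ring.
    apply ex_RInt_swap; auto. }
  assert (Hlin := RInt_comp_lin h (-1) c a c Hex').
  assert (Hexlin := ex_RInt_comp_lin h (-1) c a c Hex').
  replace (-1 * a + c) with (c - a) in Hlin by ring.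
  replace (-1 * c + c) with 0 in Hlin by ring.
  rewrite <- (opp_RInt_swap h (c - a) 0) by (apply ex_RInt_swap; exact Hex).
  rewrite <- Hlin.
  rewrite (RInt_ext _ (fun y => -1 * scal (-1) (h (-1 * y + c)))).
  - rewrite RInt_Rmult_l by exact Hexlin.
    match goal with |- _ = opp ?x => change (-1 * x = - x) end. ring.
  - intros y _. change (h (c - y) = -1 * (-1 * h (-1 * y + c))).
    replace (-1 * y + c) with (c - y) by ring. ring.
Qed.

Lemma cont2_swap H : cont2 H -> cont2 (fun x y => H y x).
Proof.
  intros Hc x y eps He. destruct (Hc y x eps He) as [d [Hd Hd']].
  exists d; split; auto.
Qed.

Lemma is_derive_RInt_triangle_u_inner (H : R -> R -> R) r0 c : cont2 H -> r0 <= c ->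
  is_derive (fun c => RInt (fun r => RInt (fun u => H u r) 0 (c - r)) r0 c) c
    (RInt (fun r => H (c - r) r) r0 c).
Proof.
  intros Hc Hc0.
  set (H' := fun r u => H u r).
  assert (Hc' : cont2 H') by (apply cont2_swap; auto).
  set (FL := fun c r => RInt (H' r) 0 (c - r)).
  assert (cFL : cont2 FL).
  { apply (cont2_comp (fun x y => RInt (H' x) 0 y) (fun c r => r) (fun c r => c - r)).
    - apply cont2_RInt_upper; auto.
    - intros; apply lip_snd.
    - intros; apply lip_diff. }
  assert (cL : cont2 (fun c r => H (c - r) r)).
  { apply (cont2_comp H (fun c r => c - r) (fun c r => r)); auto.
    - intros; apply lip_diff.
    - intros; apply lip_snd. }
  apply is_derive_ext with (fun c => RInt (FL c) r0 (c + 0)).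
  { intros; rewrite Rplus_0_r; reflexivity. }
  apply (is_derive_val _ _ _ _ (is_derive_RInt_param_upper FL (fun c r => H (c - r) r) r0 0 c
           ltac:(lra) cFL (fun c r => is_derive_RInt_upper H' r 0 r c Hc') cL)).
  unfold FL. rewrite Rplus_0_r. replace (c - c) with 0 by ring.
  rewrite (RInt_point 0 (H' c)). unfold zero; simpl. ring.
Qed.

Lemma is_derive_RInt_triangle_r_inner (H : R -> R -> R) r0 c : cont2 H -> r0 <= c ->
  is_derive (fun c => RInt (fun u => RInt (fun r => H u r) r0 (c - u)) 0 (c - r0)) c
    (RInt (fun u => H u (c - u)) 0 (c - r0)).
Proof.
  intros Hc Hc0.
  set (FR := fun c u => RInt (H u) r0 (c - u)).
  assert (cFR : cont2 FR).
  { apply (cont2_comp (fun x y => RInt (H x) r0 y) (fun c u => u) (fun c u => c - u)).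
    - apply cont2_RInt_upper; auto.
    - intros; apply lip_snd.
    - intros; apply lip_diff. }
  assert (cR : cont2 (fun c u => H u (c - u))).
  { apply (cont2_comp H (fun c u => u) (fun c u => c - u)); auto.
    - intros; apply lip_snd.
    - intros; apply lip_diff. }
  apply is_derive_ext with (fun c => RInt (FR c) 0 (c + - r0)).
  { intros; reflexivity. }
  apply (is_derive_val _ _ _ _ (is_derive_RInt_param_upper FR (fun c u => H u (c - u)) 0 (- r0) c
           ltac:(lra) cFR (fun c u => is_derive_RInt_upper H u r0 u c Hc) cR)).
  unfold FR. replace (c - (c + - r0)) with r0 by ring. replace (c + - r0) with (c - r0) by ring.
  rewrite (RInt_point r0 (H (c - r0))). unfold zero; simpl. ring.
Qed.

(* Fubini on the triangle [u >= 0, r >= r0, u + r <= rho]: both iterated integrals vanish at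
   [rho = r0] and, by [RInt_reflect], have the same derivative in [rho]. *)
Lemma RInt_triangle_swap (H : R -> R -> R) r0 rho : cont2 H -> r0 <= rho ->
  RInt (fun r => RInt (fun u => H u r) 0 (rho - r)) r0 rho =
  RInt (fun u => RInt (fun r => H u r) r0 (rho - u)) 0 (rho - r0).
Proof.
  intros Hc Hr.
  set (Psi := fun c => RInt (fun r => RInt (fun u => H u r) 0 (c - r)) r0 c
                     - RInt (fun u => RInt (fun r => H u r) r0 (c - u)) 0 (c - r0)).
  assert (DPsi : forall c, r0 <= c -> is_derive Psi c 0).
  { intros c Hc0.
    apply (is_derive_val _ _ _ _ (is_derive_Rminus _ _ c _ _
             (is_derive_RInt_triangle_u_inner H r0 c Hc Hc0)
             (is_derive_RInt_triangle_r_inner H r0 c Hc Hc0))).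
    rewrite <- (RInt_reflect (fun u => H u (c - u)) r0 c)
      by (apply (ex_RInt_cont2 (fun c u => H u (c - u))), (cont2_comp H (fun c u => u) (fun c u => c - u));
          auto; intros; [apply lip_snd | apply lip_diff]).
    rewrite (RInt_ext (fun r => H (c - r) (c - (c - r))) (fun r => H (c - r) r)) by (intros; f_equal; ring).
    apply Rminus_diag. }
  assert (Hconst : Psi rho = Psi r0).
  { apply cont_Icc_derive_0; auto.
    - apply cont_Icc_continuity_pt. intros x Hx. apply (continuity_pt_is_derive _ _ _ (DPsi x ltac:(lra))).
    - intros x Hx. apply DPsi; lra. }
  unfold Psi in Hconst. rewrite Rminus_diag in Hconst.
  rewrite (RInt_point r0 (fun r => RInt (fun u => H u r) 0 (r0 - r))),
    (RInt_point 0 (fun u => RInt (fun r => H u r) r0 (r0 - u))) in Hconst.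
  unfold zero in Hconst; simpl in Hconst. lra.
Qed.

Lemma cont_on_sub (D D' : Dom) F :
  (forall u r s p, D' u r s p -> D u r s p) -> cont_on D F -> cont_on D' F.
Proof.
  intros Hs Hc u r s p Hd eps He. destruct (Hc u r s p (Hs _ _ _ _ Hd) eps He) as [d [Hd1 Hd2]].
  exists d; split; auto.
Qed.

Lemma cont_on_ext D F G : (forall u r s p, F u r s p = G u r s p) -> cont_on D F -> cont_on D G.
Proof.
  intros He Hc u r s p Hd eps Heps. destruct (Hc u r s p Hd eps Heps) as [d [Hd1 Hd2]].
  exists d; split; auto. intros. rewrite <- !He; auto.
Qed.

Lemma cont_on_op2 D op F G : cont_op2 op -> cont_on D F -> cont_on D G ->
  cont_on D (fun u r s p => op (F u r s p) (G u r s p)).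
Proof.
  intros Hop HF HG u r s p Hd eps He.
  destruct (Hop (F u r s p) (G u r s p) eps He) as [d [Hd0 Hd1]].
  destruct (HF u r s p Hd d Hd0) as [d1 [Hd1p Hd1']].
  destruct (HG u r s p Hd d Hd0) as [d2 [Hd2p Hd2']].
  exists (Rmin d1 d2); split; [apply Rmin_pos; auto|].
  intros u' r' s' p' Hd' H1 H2 H3 H4. apply Hd1.
  - apply Hd1'; auto; eapply Rlt_le_trans; eauto; apply Rmin_l.
  - apply Hd2'; auto; eapply Rlt_le_trans; eauto; apply Rmin_r.
Qed.

Lemma cont_on_const D c : cont_on D (fun _ _ _ _ => c).
Proof.
  intros u r s p _ eps He. exists 1; split; [lra|]. intros. rewrite Rminus_diag, Rabs_R0; auto.
Qed.

Lemma cont_on_sqr D F : cont_on D F -> cont_on D (fun u r s p => F u r s p ^ 2).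
Proof.
  intros Hc. apply cont_on_ext with (fun u r s p => Rmult (F u r s p) (F u r s p)).
  - intros; ring.
  - apply cont_on_op2; auto. apply cont_op2_mult.
Qed.

Lemma cont_on_inv_r (D : Dom) : (forall u r s p, D u r s p -> 0 < r) ->
  cont_on D (fun u r s p => / r).
Proof.
  intros Hpos u r s p Hd eps He.
  assert (Hc : continuity_pt Rinv r).
  { apply (continuity_pt_inv (fun x => x) r (continuity_pt_id r)). specialize (Hpos u r s p Hd); lra. }
  destruct (proj1 (continuity_pt_ball Rinv r) Hc eps He) as [d [Hd1 Hd2]].
  exists d; split; auto.
Qed.

Definition lip1 (f : R -> R) := forall x y, Rabs (f x - f y) <= Rabs (x - y).

Lemma lip1_id : lip1 (fun x => x).
Proof. intros x y; lra. Qed.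

Lemma lip1_const c : lip1 (fun _ => c).
Proof. intros x y; rewrite Rminus_diag, Rabs_R0; apply Rabs_pos. Qed.

Lemma lip1_reflect c : lip1 (fun x => c - x).
Proof. intros x y. replace (c - x - (c - y)) with (- (x - y)) by ring. rewrite Rabs_Ropp; lra. Qed.

Lemma cont_Icc_line D X a b fu fr fs fp : cont_on D X ->
  (forall x, a <= x <= b -> D (fu x) (fr x) (fs x) (fp x)) ->
  lip1 fu -> lip1 fr -> lip1 fs -> lip1 fp ->
  cont_Icc a b (fun x => X (fu x) (fr x) (fs x) (fp x)).
Proof.
  intros Hc HD Hu Hr Hs Hp x Hx eps He.
  destruct (Hc _ _ _ _ (HD x Hx) eps He) as [d [Hd Hd']].
  exists d; split; auto. intros y Hy Hyx.
  apply Hd'; [auto | eapply Rle_lt_trans; [apply Hu | apply Hyx] | eapply Rle_lt_trans; [apply Hr | apply Hyx]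
             | eapply Rle_lt_trans; [apply Hs | apply Hyx] | eapply Rle_lt_trans; [apply Hp | apply Hyx]].
Qed.

Definition dist3 (x y : R * R * R) : R :=
  match x, y with (a, b, c), (a', b', c') => Rmax (Rabs (a' - a)) (Rmax (Rabs (b' - b)) (Rabs (c' - c))) end.

Lemma dist3_refl x d : 0 < d -> dist3 x x < d.
Proof.
  destruct x as [[a b] c]. simpl. rewrite !Rminus_diag, !Rabs_R0. unfold Rmax; repeat destruct Rle_dec; lra.
Qed.

Lemma dist3_lt a b c a' b' c' d : Rabs (a' - a) < d -> Rabs (b' - b) < d -> Rabs (c' - c) < d ->
  dist3 (a, b, c) (a', b', c') < d.
Proof. intros; simpl; repeat apply Rmax_lub_lt; auto. Qed.

Lemma dist3_inv a b c a' b' c' d : dist3 (a, b, c) (a', b', c') < d ->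
  Rabs (a' - a) < d /\ Rabs (b' - b) < d /\ Rabs (c' - c) < d.
Proof.
  simpl; intros H.
  pose proof (Rmax_l (Rabs (a' - a)) (Rmax (Rabs (b' - b)) (Rabs (c' - c)))).
  pose proof (Rmax_r (Rabs (a' - a)) (Rmax (Rabs (b' - b)) (Rabs (c' - c)))).
  pose proof (Rmax_l (Rabs (b' - b)) (Rabs (c' - c))).
  pose proof (Rmax_r (Rabs (b' - b)) (Rabs (c' - c))). repeat split; lra.
Qed.

Definition DomB (B : R -> R -> Prop) : Dom := fun u r s p => B u r /\ -1 <= s <= 1.

(* The integral over the unit sphere, with respect to [ds dphi] where [s = cos theta]. *)
Definition Isph (X : F4) (u r : R) : R :=
  RInt (fun s => RInt (fun p => X u r s p) 0 (2 * PI)) (-1) 1.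

Section Cylinder.

Variable B : R -> R -> Prop.

Lemma ex_RInt_phi X u r s a b : cont_on (DomB B) X -> B u r -> -1 <= s <= 1 ->
  ex_RInt (fun q => X u r s q) a b.
Proof.
  intros Hc HB Hs. apply (ex_RInt_continuous (V := R_CompleteNormedModule)). intros z _.
  apply continuity_pt_filterlim, continuity_pt_ball. intros eps He.
  destruct (Hc u r s z (conj HB Hs) eps He) as [d [Hd Hd']]. exists d; split; auto.
  intros y Hy. apply Hd'; auto; try (split; auto); rewrite Rminus_diag, Rabs_R0; auto.
Qed.

Lemma ex_RInt_s X u r p : cont_on (DomB B) X -> B u r -> ex_RInt (fun s => X u r s p) (-1) 1.
Proof.
  intros Hc HB. apply ex_RInt_cont_Icc; [lra|].
  apply (cont_Icc_line (DomB B) X (-1) 1 (fun _ => u) (fun _ => r) (fun s => s) (fun _ => p));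
    auto using lip1_id, lip1_const. intros; split; auto.
Qed.

Lemma cont_on_RInt_phi X : cont_on (DomB B) X ->
  cont_on (DomB B) (fun u r s p => RInt (fun q => X u r s q) 0 (2 * PI)).
Proof.
  intros Hc u r s p [HB Hs] eps He.
  assert (Hpi := PI_RGT_0).
  set (ok := fun x : R * R * R => match x with (a, b, c) => DomB B a b c 0 end).
  set (F := fun (x : R * R * R) q => match x with (a, b, c) => X a b c q end).
  destruct (RInt_param_cont dist3 ok F 0 (2 * PI) (u, r, s)) with (eps := eps) as [d [Hd Hd']]; auto.
  - rewrite Rmin_left, Rmax_right by lra.
    apply (cont_param_unif dist3 ok F 0 (2 * PI) (u, r, s)).
    + simpl; split; auto.
    + intros; apply dist3_refl; auto.
    + intros t Ht e He'. destruct (Hc u r s t (conj HB Hs) e He') as [d [Hd Hd']].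
      exists d; split; auto. intros [[a b] c] t' Hok Ht' Hdist Htt.
      apply dist3_inv in Hdist as [H1 [H2 H3]]. simpl. apply Hd'; auto.
  - intros [[a b] c] [Hb Hc']. simpl. apply ex_RInt_phi; auto.
  - simpl; split; auto.
  - exists d; split; auto. intros u' r' s' p' [HB' Hs'] H1 H2 H3 H4.
    apply (Hd' (u', r', s')); [simpl; split; auto | apply dist3_lt; auto].
Qed.

Lemma cont_on_RInt_s X : cont_on (DomB B) X ->
  cont_on (DomB B) (fun u r s p => RInt (fun s' => X u r s' p) (-1) 1).
Proof.
  intros Hc u r s p [HB Hs] eps He.
  set (ok := fun x : R * R * R => match x with (a, b, c) => B a b end).
  set (F := fun (x : R * R * R) t => match x with (a, b, c) => X a b t c end).
  destruct (RInt_param_cont dist3 ok F (-1) 1 (u, r, p)) with (eps := eps) as [d [Hd Hd']]; auto.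
  - rewrite Rmin_left, Rmax_right by lra.
    apply (cont_param_unif dist3 ok F (-1) 1 (u, r, p)).
    + simpl; auto.
    + intros; apply dist3_refl; auto.
    + intros t Ht e He'. destruct (Hc u r t p (conj HB Ht) e He') as [d [Hd Hd']].
      exists d; split; auto. intros [[a b] c] t' Hok Ht' Hdist Htt.
      apply dist3_inv in Hdist as [H1 [H2 H3]]. simpl. apply Hd'; auto. split; auto.
  - intros [[a b] c] Hb. simpl. apply ex_RInt_s; auto.
  - exists d; split; auto. intros u' r' s' p' [HB' Hs'] H1 H2 H3 H4.
    apply (Hd' (u', r', p')); [simpl; auto | apply dist3_lt; auto].
Qed.

Lemma cont_on_Isph X : cont_on (DomB B) X -> cont_on (DomB B) (fun u r s p => Isph X u r).
Proof. intros Hc. exact (cont_on_RInt_s _ (cont_on_RInt_phi X Hc)). Qed.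

Lemma ex_RInt_s_phi X u r : cont_on (DomB B) X -> B u r ->
  ex_RInt (fun s => RInt (fun p => X u r s p) 0 (2 * PI)) (-1) 1.
Proof.
  intros Hc HB. apply (ex_RInt_s (fun u r s p => RInt (fun q => X u r s q) 0 (2 * PI)) u r 0); auto.
  apply cont_on_RInt_phi; auto.
Qed.

Lemma Isph_plus X Y u r : cont_on (DomB B) X -> cont_on (DomB B) Y -> B u r ->
  Isph (fun u r s p => X u r s p + Y u r s p) u r = Isph X u r + Isph Y u r.
Proof.
  intros HX HY HB. unfold Isph.
  rewrite <- RInt_Rplus by (apply ex_RInt_s_phi; auto).
  apply RInt_ext. intros s Hs. rewrite Rmin_left, Rmax_right in Hs by lra.
  apply RInt_Rplus; apply ex_RInt_phi; auto; lra.
Qed.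

Lemma Isph_scal X c u r : cont_on (DomB B) X -> B u r ->
  Isph (fun u r s p => c * X u r s p) u r = c * Isph X u r.
Proof.
  intros HX HB. unfold Isph.
  rewrite <- RInt_Rmult_l by (apply ex_RInt_s_phi; auto).
  apply RInt_ext. intros s Hs. rewrite Rmin_left, Rmax_right in Hs by lra.
  apply RInt_Rmult_l; apply ex_RInt_phi; auto; lra.
Qed.

Lemma Isph_ge0 X u r : cont_on (DomB B) X -> B u r ->
  (forall s p, -1 <= s <= 1 -> 0 <= X u r s p) -> 0 <= Isph X u r.
Proof.
  intros HX HB Hp. assert (Hpi := PI_RGT_0). unfold Isph.
  apply RInt_ge_0; [lra | apply ex_RInt_s_phi; auto |].
  intros s Hs. apply RInt_ge_0; [lra | apply ex_RInt_phi; auto; lra |]. intros; apply Hp; lra.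
Qed.

Lemma cont_Icc_Isph X a b fu fr : cont_on (DomB B) X -> lip1 fu -> lip1 fr ->
  (forall x, a <= x <= b -> B (fu x) (fr x)) -> cont_Icc a b (fun x => Isph X (fu x) (fr x)).
Proof.
  intros Hc Hu Hr HB.
  apply (cont_Icc_line (DomB B) (fun u r s p => Isph X u r) a b fu fr (fun _ => 0) (fun _ => 0));
    auto using lip1_const.
  - apply cont_on_Isph; auto.
  - intros x Hx; split; auto; lra.
Qed.

Lemma ex_RInt_Isph X a b fu fr : cont_on (DomB B) X -> lip1 fu -> lip1 fr -> a <= b ->
  (forall x, a <= x <= b -> B (fu x) (fr x)) -> ex_RInt (fun x => Isph X (fu x) (fr x)) a b.
Proof. intros; apply ex_RInt_cont_Icc; auto; apply cont_Icc_Isph; auto. Qed.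

Lemma cont2_of_cont_on Y (f g : R -> R -> R) : cont_on (DomB B) Y ->
  (forall x y, B (f x y) (g x y)) ->
  (forall x y x' y', Rabs (f x' y' - f x y) <= Rabs (x' - x) + Rabs (y' - y)) ->
  (forall x y x' y', Rabs (g x' y' - g x y) <= Rabs (x' - x) + Rabs (y' - y)) ->
  cont2 (fun x y => Y (f x y) (g x y) 0 0).
Proof.
  intros Hc HB Hf Hg x y eps He. assert (H01 : -1 <= 0 <= 1) by lra.
  destruct (Hc (f x y) (g x y) 0 0 (conj (HB x y) H01) eps He) as [d [Hd Hd']].
  exists (d / 2); split; [lra|]. intros x' y' H1 H2.
  specialize (Hf x y x' y'); specialize (Hg x y x' y').
  apply Hd'; [split; [apply HB | lra] | lra | lra | rewrite Rminus_diag, Rabs_R0; lra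
             | rewrite Rminus_diag, Rabs_R0; lra].
Qed.

Lemma is_derive_Isph_u X Xu u0 r eta : cont_on (DomB B) X -> cont_on (DomB B) Xu -> 0 < eta ->
  (forall x, Rabs (x - u0) < eta -> B x r) ->
  (forall x s p, Rabs (x - u0) < eta -> -1 <= s <= 1 -> is_derive (fun z => X z r s p) x (Xu x r s p)) ->
  is_derive (fun z => Isph X z r) u0 (Isph Xu u0 r).
Proof.
  intros HX HXu Heta HB Hd. assert (Hpi := PI_RGT_0).
  assert (HB0 : B u0 r) by (apply HB; rewrite Rminus_diag, Rabs_R0; auto).
  assert (HXu1 := cont_on_RInt_phi Xu HXu).
  unfold Isph.
  apply (is_derive_RInt_param_unif (fun z s => RInt (fun p => X z r s p) 0 (2 * PI))
           (fun z s => RInt (fun p => Xu z r s p) 0 (2 * PI)) (-1) 1 u0 eta); [lra | exact Heta | | | |].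
  - intros x t Hx Ht.
    set (eta' := eta - Rabs (x - u0)).
    assert (Heta' : 0 < eta') by (unfold eta'; lra).
    assert (Hin : forall z, Rabs (z - x) < eta' -> Rabs (z - u0) < eta).
    { intros z Hz. unfold eta' in Hz. pose proof (Rabs_triang (z - x) (x - u0)) as Htri.
      replace (z - x + (x - u0)) with (z - u0) in Htri by ring. lra. }
    apply (is_derive_RInt_param_unif (fun z p => X z r t p) (fun z p => Xu z r t p) 0 (2 * PI) x eta');
      [lra | exact Heta' | intros z p Hz Hp; apply Hd; auto | intros z Hz; apply ex_RInt_phi; auto
      | apply ex_RInt_phi; auto |].
    intros e He.
    destruct (cont_param_unif (fun a b => Rabs (b - a)) (fun z => Rabs (z - x) < eta')
               (fun z p => Xu z r t p) 0 (2 * PI) x) with (eps := e) as [d [Hd1 Hd2]]; auto.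
    + rewrite Rminus_diag, Rabs_R0; auto.
    + intros; rewrite Rminus_diag, Rabs_R0; auto.
    + intros t0 Ht0 e' He'. destruct (HXu x r t t0 (conj (HB x Hx) Ht) e' He') as [d [Hd1 Hd2]].
      exists d; split; auto. intros z t' Hz Ht' Hzd Htt. apply Hd2; auto.
      split; auto. rewrite Rminus_diag, Rabs_R0; auto. rewrite Rminus_diag, Rabs_R0; auto.
    + exists d; split; auto.
  - intros x Hx. apply ex_RInt_s_phi; auto.
  - apply ex_RInt_s_phi; auto.
  - intros e He.
    destruct (cont_param_unif (fun a b => Rabs (b - a)) (fun z => Rabs (z - u0) < eta)
               (fun z s => RInt (fun p => Xu z r s p) 0 (2 * PI)) (-1) 1 u0) with (eps := e)
      as [d [Hd1 Hd2]]; auto.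
    + rewrite Rminus_diag, Rabs_R0; auto.
    + intros; rewrite Rminus_diag, Rabs_R0; auto.
    + intros t0 Ht0 e' He'. destruct (HXu1 u0 r t0 0 (conj HB0 Ht0) e' He') as [d [Hd1 Hd2]].
      exists d; split; auto. intros z t' Hz Ht' Hzd Htt. apply (Hd2 z r t' 0); auto.
      split; auto. rewrite Rminus_diag, Rabs_R0; auto. rewrite Rminus_diag, Rabs_R0; auto.
    + exists d; split; auto.
Qed.

End Cylinder.

Definition swap_ur (X : F4) : F4 := fun u r s p => X r u s p.

Lemma cont_on_swap_ur B X : cont_on (DomB B) X -> cont_on (DomB (fun u r => B r u)) (swap_ur X).
Proof.
  intros Hc u r s p [HB Hs] eps He. destruct (Hc r u s p (conj HB Hs) eps He) as [d [Hd Hd']].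
  exists d; split; auto. intros u' r' s' p' [HB' Hs'] H1 H2 H3 H4. apply Hd'; auto. split; auto.
Qed.

Lemma is_derive_Isph_r B X Xr u r0' eta : cont_on (DomB B) X -> cont_on (DomB B) Xr -> 0 < eta ->
  (forall x, Rabs (x - r0') < eta -> B u x) ->
  (forall x s p, Rabs (x - r0') < eta -> -1 <= s <= 1 -> is_derive (fun z => X u z s p) x (Xr u x s p)) ->
  is_derive (fun z => Isph X u z) r0' (Isph Xr u r0').
Proof.
  intros HX HXr Heta HB Hd.
  exact (is_derive_Isph_u (fun u r => B r u) (swap_ur X) (swap_ur Xr) r0' u eta
           (cont_on_swap_ur B X HX) (cont_on_swap_ur B Xr HXr) Heta HB Hd).
Qed.

Definition triangle (r0 T : R) : R -> R -> Prop := fun u r => 0 <= u /\ r0 <= r /\ u + r <= T + r0.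

Lemma DT_DomB r0 T u r s p : DT r0 T u r s p <-> DomB (triangle r0 T) u r s p.
Proof. unfold DT, DomB, triangle; tauto. Qed.

Lemma is_derive_deriv_within (f : R -> R) x d ok : deriv_within ok (fun t => f (x + t)) d ->
  (exists eta, 0 < eta /\ forall t, Rabs t < eta -> ok t) -> is_derive f x d.
Proof.
  intros Hd [eta [Heta Hok]]. apply is_derive_Reals. intros eps He.
  destruct (Hd eps He) as [del [Hdel Hdel']].
  exists (mkposreal (Rmin del eta) (Rmin_pos _ _ Hdel Heta)). simpl. intros h Hh0 Hh.
  pose proof (Rmin_l del eta); pose proof (Rmin_r del eta).
  specialize (Hdel' h Hh0 ltac:(lra) (Hok h ltac:(lra))). rewrite Rplus_0_r in Hdel'. exact Hdel'.
Qed.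

Section C1Triangle.

Variables (r0 T : R) (F Fu Fr Fs Fp : F4).
Hypothesis CF : C1_on (DT r0 T) F Fu Fr Fs Fp.

Lemma C1_on_cont :
  cont_on (DomB (triangle r0 T)) F /\ cont_on (DomB (triangle r0 T)) Fu /\
  cont_on (DomB (triangle r0 T)) Fr /\ cont_on (DomB (triangle r0 T)) Fs /\
  cont_on (DomB (triangle r0 T)) Fp.
Proof.
  destruct CF as [H1 [H2 [H3 [H4 [H5 _]]]]].
  repeat split; eapply cont_on_sub; try eassumption; intros; apply DT_DomB; auto.
Qed.

Lemma C1_on_derive_u u r s p : 0 < u -> r0 <= r -> u + r < T + r0 -> -1 <= s <= 1 ->
  is_derive (fun z => F z r s p) u (Fu u r s p).
Proof.
  intros H1 H2 H3 H4. destruct CF as [_ [_ [_ [_ [_ Hd]]]]].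
  destruct (Hd u r s p ltac:(repeat split; lra)) as [H _].
  apply is_derive_deriv_within with (1 := H). exists (Rmin u (T + r0 - u - r)); split.
  { apply Rmin_pos; lra. }
  intros t Ht. pose proof (Rmin_l u (T + r0 - u - r)). pose proof (Rmin_r u (T + r0 - u - r)).
  revert Ht; unfold Rabs; destruct Rcase_abs; intros; repeat split; lra.
Qed.

Lemma C1_on_derive_r u r s p : 0 <= u -> r0 < r -> u + r < T + r0 -> -1 <= s <= 1 ->
  is_derive (fun z => F u z s p) r (Fr u r s p).
Proof.
  intros H1 H2 H3 H4. destruct CF as [_ [_ [_ [_ [_ Hd]]]]].
  destruct (Hd u r s p ltac:(repeat split; lra)) as [_ [H _]].
  apply is_derive_deriv_within with (1 := H). exists (Rmin (r - r0) (T + r0 - u - r)); split.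
  { apply Rmin_pos; lra. }
  intros t Ht. pose proof (Rmin_l (r - r0) (T + r0 - u - r)). pose proof (Rmin_r (r - r0) (T + r0 - u - r)).
  revert Ht; unfold Rabs; destruct Rcase_abs; intros; repeat split; lra.
Qed.

Lemma C1_on_derive_s u r s p : DT r0 T u r s p -> Rabs s < 1 ->
  is_derive (fun z => F u r z p) s (Fs u r s p).
Proof.
  intros HD Hs. destruct CF as [_ [_ [_ [_ [_ Hd]]]]]. destruct (Hd u r s p HD) as [_ [_ [H _]]].
  apply is_derive_deriv_within with (1 := H). exists (1 - Rabs s); split; [lra|].
  intros t Ht. destruct HD as [H1 [H2 [H3 _]]]. repeat split; auto;
  revert Ht Hs; unfold Rabs; repeat destruct Rcase_abs; intros; lra.
Qed.

Lemma C1_on_derive_phi u r s p : DT r0 T u r s p -> is_derive (fun z => F u r s z) p (Fp u r s p).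
Proof.
  intros HD. destruct CF as [_ [_ [_ [_ [_ Hd]]]]]. destruct (Hd u r s p HD) as [_ [_ [_ H]]].
  apply is_derive_deriv_within with (1 := H). exists 1; split; [lra|]. intros; exact HD.
Qed.

End C1Triangle.

Ltac cont_on_tac :=
  repeat first [ assumption
               | apply cont_on_const
               | apply cont_on_sqr
               | apply cont_on_inv_r; intros ? ? ? ? [[_ [? _]] _]; lra
               | apply (cont_on_op2 _ Rplus); [apply cont_op2_plus | |]
               | apply (cont_on_op2 _ Rmult); [apply cont_op2_mult | |] ].

Section TriangleFubini.

Variables (r0 T : R) (X : F4).
Hypothesis HT : 0 <= T.
Hypothesis cX : cont_on (DomB (triangle r0 T)) X.

(* [RInt_triangle_swap] needs a function continuous on the whole plane. *)
Definition triangle_ext (u r : R) : R :=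
  Isph X (clamp 0 T u) (clamp r0 (T + r0 - clamp 0 T u) r).

Lemma triangle_ext_id u r : triangle r0 T u r -> triangle_ext u r = Isph X u r.
Proof.
  intros (H1 & H2 & H3). unfold triangle_ext.
  rewrite (clamp_id 0 T u) by lra. rewrite clamp_id by lra. reflexivity.
Qed.

Lemma cont2_triangle_ext : cont2 triangle_ext.
Proof.
  assert (Hcu : forall u, 0 <= clamp 0 T u <= T) by (intros; apply clamp_in; lra).
  apply (cont2_of_cont_on (triangle r0 T) (fun u r s p => Isph X u r) (fun x y => clamp 0 T x)
           (fun x y => clamp r0 (T + r0 - clamp 0 T x) y)).
  - apply cont_on_Isph; auto.
  - intros x y. specialize (Hcu x). pose proof (clamp_in r0 (T + r0 - clamp 0 T x) y ltac:(lra)).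
    unfold triangle; lra.
  - intros x y x' y'. pose proof (clamp_lip 0 T x' x ltac:(lra)). pose proof (Rabs_pos (y' - y)); lra.
  - intros x y x' y'. pose proof (Hcu x'); specialize (Hcu x).
    eapply Rle_trans; [apply clamp_lip2; lra|].
    replace (T + r0 - clamp 0 T x' - (T + r0 - clamp 0 T x)) with (- (clamp 0 T x' - clamp 0 T x)) by ring.
    rewrite Rabs_Ropp. pose proof (clamp_lip 0 T x' x ltac:(lra)). lra.
Qed.

Lemma RInt_Isph_triangle_r u : 0 <= u <= T ->
  RInt (fun r => Isph X u r) r0 (T + r0 - u) = RInt (triangle_ext u) r0 (T + r0 - u).
Proof.
  intros Hu. apply RInt_ext. intros x Hx. rewrite Rmin_left, Rmax_right in Hx by lra.
  rewrite triangle_ext_id; auto. unfold triangle; lra.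
Qed.

Lemma ex_RInt_triangle_Isph : ex_RInt (fun u => RInt (fun r => Isph X u r) r0 (T + r0 - u)) 0 T.
Proof.
  apply ex_RInt_ext with (fun u => RInt (triangle_ext u) r0 (T + r0 - u)).
  { intros x Hx. rewrite Rmin_left, Rmax_right in Hx by lra. symmetry; apply RInt_Isph_triangle_r; lra. }
  apply (ex_RInt_continuous (V := R_CompleteNormedModule)). intros z _.
  apply continuity_pt_filterlim, continuity_pt_ball. intros eps He.
  destruct (cont2_RInt_upper triangle_ext r0 cont2_triangle_ext z (T + r0 - z) eps He) as [d [Hd Hd']].
  exists (d / 2); split; [lra|]. intros y Hy. apply Hd'; [lra|].
  replace (T + r0 - y - (T + r0 - z)) with (- (y - z)) by ring. rewrite Rabs_Ropp; lra.
Qed.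

Lemma RInt_triangle_swap_Isph :
  RInt (fun r => RInt (fun u => Isph X u r) 0 (T + r0 - r)) r0 (T + r0) =
  RInt (fun u => RInt (fun r => Isph X u r) r0 (T + r0 - u)) 0 T.
Proof.
  assert (Hswap := RInt_triangle_swap triangle_ext r0 (T + r0) cont2_triangle_ext ltac:(lra)).
  replace (T + r0 - r0) with T in Hswap by ring.
  rewrite (RInt_ext _ (fun r => RInt (fun u => triangle_ext u r) 0 (T + r0 - r))).
  - rewrite Hswap. apply RInt_ext. intros x Hx. rewrite Rmin_left, Rmax_right in Hx by lra.
    symmetry; apply RInt_Isph_triangle_r; lra.
  - intros r Hr. rewrite Rmin_left, Rmax_right in Hr by lra.
    apply RInt_ext. intros x Hx. rewrite Rmin_left, Rmax_right in Hx by lra.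
    rewrite triangle_ext_id; auto. unfold triangle; lra.
Qed.

Lemma RInt_hypotenuse :
  RInt (fun u => Isph X u (T + r0 - u)) 0 T = RInt (fun r => Isph X (T + r0 - r) r) r0 (T + r0).
Proof.
  assert (Hex : ex_RInt (fun u => Isph X u (T + r0 - u)) 0 (T + r0 - r0)).
  { replace (T + r0 - r0) with T by ring.
    apply (ex_RInt_Isph (triangle r0 T) X 0 T (fun u => u) (fun u => T + r0 - u));
      auto using lip1_id, lip1_reflect. intros; unfold triangle; lra. }
  rewrite (RInt_ext (fun r => Isph X (T + r0 - r) r) (fun r => Isph X (T + r0 - r) (T + r0 - (T + r0 - r))))
    by (intros; f_equal; ring).
  rewrite (RInt_reflect (fun u => Isph X u (T + r0 - u)) r0 (T + r0) Hex).
  replace (T + r0 - r0) with T by ring. reflexivity.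
Qed.

End TriangleFubini.

Section CharacteristicEnergy.

Variables (r0 T : R) (R_ Ru Rr Rs Rp P Pu Pr Ps Pp Q Qu Qr Qs Qp : F4).
Hypothesis Hr0 : 0 < r0.
Hypothesis CR : C1_on (DT r0 T) R_ Ru Rr Rs Rp.
Hypothesis CP : C1_on (DT r0 T) P Pu Pr Ps Pp.
Hypothesis CQ : C1_on (DT r0 T) Q Qu Qr Qs Qp.
Hypothesis perR : periodic_phi (DT r0 T) R_.
Hypothesis perQ : periodic_phi (DT r0 T) Q.
Hypothesis Hsys : forall u r s p, DT r0 T u r s p -> Rabs s < 1 ->
     2 * Ru u r s p =
       Rr u r s p + sqrt (1 - s ^ 2) / r * Ps u r s p
       + 1 / (r * sqrt (1 - s ^ 2)) * Qp u r s p
       - s * P u r s p / (r * sqrt (1 - s ^ 2))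
     /\ Pr u r s p = sqrt (1 - s ^ 2) / r * Rs u r s p - P u r s p / r
     /\ Qr u r s p = 1 / (r * sqrt (1 - s ^ 2)) * Rp u r s p - Q u r s p / r.

Local Notation D := (DomB (triangle r0 T)).

Ltac cont_facts :=
  pose proof (C1_on_cont _ _ _ _ _ _ _ CR) as (cR & cRu & cRr & cRs & cRp);
  pose proof (C1_on_cont _ _ _ _ _ _ _ CP) as (cP & cPu & cPr & cPs & cPp);
  pose proof (C1_on_cont _ _ _ _ _ _ _ CQ) as (cQ & cQu & cQr & cQs & cQp).

Definition eR : F4 := fun u r s p => R_ u r s p ^ 2.
Definition ePQ : F4 := fun u r s p => P u r s p ^ 2 + Q u r s p ^ 2.
Definition eR_u : F4 := fun u r s p => 2 * R_ u r s p * Ru u r s p.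
Definition eR_r : F4 := fun u r s p => 2 * R_ u r s p * Rr u r s p.
Definition ePQ_r : F4 := fun u r s p => 2 * P u r s p * Pr u r s p + 2 * Q u r s p * Qr u r s p.
Definition loss : F4 := fun u r s p => (P u r s p ^ 2 + Q u r s p ^ 2) * / r.
(* [balance] is [R (eq 1) + P (eq 2) + Q (eq 3)] with the [u]- and [r]-derivatives moved to the left. *)
Definition balance : F4 := fun u r s p =>
  eR_u u r s p + -1/2 * eR_r u r s p + 1/2 * ePQ_r u r s p + loss u r s p.

Lemma cont_on_densities :
  cont_on D eR /\ cont_on D ePQ /\ cont_on D eR_u /\ cont_on D eR_r /\ cont_on D ePQ_r /\
  cont_on D loss /\ cont_on D balance.
Proof.
  cont_facts. unfold balance, eR, ePQ, eR_u, eR_r, ePQ_r, loss. repeat split; cont_on_tac.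
Qed.

(* The angular derivatives enter only through [d/ds (sqrt (1 - s^2) R P)] and [d/dphi (R Q)]. *)
Lemma balance_divergence_form u r s p : DT r0 T u r s p -> Rabs s < 1 ->
  balance u r s p =
    / r * sqrt (1 - s ^ 2) * (Rs u r s p * P u r s p + R_ u r s p * Ps u r s p)
    + / r * (- s / sqrt (1 - s ^ 2)) * (R_ u r s p * P u r s p)
    + / (r * sqrt (1 - s ^ 2)) * (Rp u r s p * Q u r s p + R_ u r s p * Qp u r s p).
Proof.
  intros HD Hs. destruct (Hsys u r s p HD Hs) as [E1 [E2 E3]].
  assert (Hr : 0 < r) by (destruct HD as [_ [H _]]; lra).
  assert (Hw : 0 < sqrt (1 - s ^ 2)).
  { apply sqrt_lt_R0. assert (Rabs s * Rabs s < 1) by (pose proof (Rabs_pos s); nra).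
    rewrite <- Rabs_mult in H. apply Rabs_def2 in H. nra. }
  unfold balance, eR_u, eR_r, ePQ_r, loss.
  replace (2 * R_ u r s p * Ru u r s p) with (R_ u r s p * (2 * Ru u r s p)) by ring.
  rewrite E1, E2, E3. field. lra.
Qed.

Lemma RInt_phi_RQ_flux u r s : triangle r0 T u r -> -1 <= s <= 1 ->
  RInt (fun p => Rp u r s p * Q u r s p + R_ u r s p * Qp u r s p) 0 (2 * PI) = 0.
Proof.
  intros HB Hs. cont_facts. assert (Hpi := PI_RGT_0).
  assert (HD : forall p, DT r0 T u r s p) by (intros p; apply DT_DomB; split; auto).
  rewrite (RInt_derive_Icc (fun p => R_ u r s p * Q u r s p)); [| lra | | |].
  - replace (2 * PI) with (0 + 2 * PI) by ring. rewrite perR, perQ by auto. R_ring.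
  - apply (cont_Icc_line D (fun u r s p => R_ u r s p * Q u r s p) 0 (2 * PI) (fun _ => u) (fun _ => r)
             (fun _ => s) (fun p => p)); auto using lip1_const, lip1_id; [cont_on_tac | split; auto].
  - apply (cont_Icc_line D (fun u r s p => Rp u r s p * Q u r s p + R_ u r s p * Qp u r s p) 0 (2 * PI)
             (fun _ => u) (fun _ => r) (fun _ => s) (fun p => p)); auto using lip1_const, lip1_id;
      [cont_on_tac | split; auto].
  - intros p _. exact (Derive.is_derive_mult _ _ p _ _ (C1_on_derive_phi _ _ _ _ _ _ _ CR _ _ _ _ (HD p))
                         (C1_on_derive_phi _ _ _ _ _ _ _ CQ _ _ _ _ (HD p))).
Qed.

Definition RP_phi (u r s : R) : R := RInt (fun p => R_ u r s p * P u r s p) 0 (2 * PI).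

Lemma is_derive_RP_phi u r s : triangle r0 T u r -> Rabs s < 1 ->
  is_derive (RP_phi u r) s (RInt (fun p => Rs u r s p * P u r s p + R_ u r s p * Ps u r s p) 0 (2 * PI)).
Proof.
  intros HB Hs. cont_facts. assert (Hpi := PI_RGT_0).
  assert (Hin : forall z, Rabs (z - s) < 1 - Rabs s -> Rabs z < 1).
  { intros z Hz. pose proof (Rabs_triang (z - s) s) as Htri.
    replace (z - s + s) with z in Htri by ring. lra. }
  assert (Hin2 : forall z, Rabs z < 1 -> -1 <= z <= 1).
  { intros z Hz. revert Hz; unfold Rabs; destruct Rcase_abs; intros; lra. }
  assert (HD : forall z p, -1 <= z <= 1 -> DT r0 T u r z p) by (intros; apply DT_DomB; split; auto).
  set (dRP := fun u r s p => Rs u r s p * P u r s p + R_ u r s p * Ps u r s p).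
  assert (cdRP : cont_on D dRP) by (unfold dRP; cont_on_tac).
  apply (is_derive_RInt_param_unif (fun z p => R_ u r z p * P u r z p) (fun z p => dRP u r z p)
           0 (2 * PI) s (1 - Rabs s)); [lra | lra | | | | ].
  - intros z p Hz _. specialize (Hin z Hz).
    exact (Derive.is_derive_mult _ _ z _ _ (C1_on_derive_s _ _ _ _ _ _ _ CR _ _ _ _ (HD z p (Hin2 z Hin)) Hin)
             (C1_on_derive_s _ _ _ _ _ _ _ CP _ _ _ _ (HD z p (Hin2 z Hin)) Hin)).
  - intros z Hz. apply (ex_RInt_phi (triangle r0 T) (fun u r s p => R_ u r s p * P u r s p));
      [cont_on_tac | auto |].
    apply Hin2, Hin, Hz.
  - apply (ex_RInt_phi (triangle r0 T)); auto.
  - intros e He.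
    destruct (cont_param_unif (fun a b => Rabs (b - a)) (fun z => -1 <= z <= 1) (fun z p => dRP u r z p)
               0 (2 * PI) s) with (eps := e) as [d [Hd1 Hd2]]; auto.
    + intros d0 Hd0; rewrite Rminus_diag, Rabs_R0; auto.
    + intros t Ht e' He'. destruct (cdRP u r s t (conj HB (Hin2 s Hs)) e' He') as [d [Hd1 Hd2]].
      exists d; split; auto. intros z t' Hz Ht' Hzd Htt. apply Hd2; auto.
      split; auto. rewrite Rminus_diag, Rabs_R0; auto. rewrite Rminus_diag, Rabs_R0; auto.
    + exists d; split; [auto|]. intros x t Hx Hxd Ht. apply Hd2; auto.
Qed.

Lemma is_derive_weighted_RP_phi u r s : triangle r0 T u r -> -1 < s < 1 ->
  is_derive (fun z => sqrt (1 - z ^ 2) * RP_phi u r z * / r) s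
    (RInt (fun p => balance u r s p) 0 (2 * PI)).
Proof.
  intros HB Hs. cont_facts.
  assert (Hs1 : Rabs s < 1) by (unfold Rabs; destruct Rcase_abs; lra).
  assert (Hw : 0 < 1 - s ^ 2) by nra.
  assert (Hwpos : 0 < sqrt (1 - s ^ 2)) by (apply sqrt_lt_R0; auto).
  assert (Hr : 0 < r) by (destruct HB as [_ [H _]]; lra).
  assert (HD : forall p, DT r0 T u r s p) by (intros; apply DT_DomB; split; auto; lra).
  assert (Dsq : is_derive (fun z => sqrt (1 - z ^ 2)) s ((0 - 2 * s * 1) / (2 * sqrt (1 - s ^ 2)))).
  { apply (is_derive_sqrt (fun z => 1 - z ^ 2) s); [|exact Hw].
    apply is_derive_Rminus; [apply is_derive_Rconst | apply is_derive_Rsqr, is_derive_Rid]. }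
  apply (is_derive_val _ _ _ _ (Derive.is_derive_mult _ _ s _ _
           (Derive.is_derive_mult _ _ s _ _ Dsq (is_derive_RP_phi u r s HB Hs1))
           (is_derive_Rconst (/ r) s))).
  rewrite (RInt_ext (fun p => balance u r s p) (fun p =>
     / r * sqrt (1 - s ^ 2) * (Rs u r s p * P u r s p + R_ u r s p * Ps u r s p)
     + / r * (- s / sqrt (1 - s ^ 2)) * (R_ u r s p * P u r s p)
     + / (r * sqrt (1 - s ^ 2)) * (Rp u r s p * Q u r s p + R_ u r s p * Qp u r s p)))
    by (intros; apply balance_divergence_form; auto).
  assert (Hex : forall X, cont_on D X -> ex_RInt (fun p => X u r s p) 0 (2 * PI))
    by (intros; apply (ex_RInt_phi (triangle r0 T)); auto; lra).
  rewrite RInt_lin_comb3.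
  - rewrite RInt_phi_RQ_flux by (auto; lra). unfold RP_phi. R_field. lra.
  - apply (Hex (fun u r s p => Rs u r s p * P u r s p + R_ u r s p * Ps u r s p)). cont_on_tac.
  - apply (Hex (fun u r s p => R_ u r s p * P u r s p)). cont_on_tac.
  - apply (Hex (fun u r s p => Rp u r s p * Q u r s p + R_ u r s p * Qp u r s p)). cont_on_tac.
Qed.

Lemma Isph_balance u r : triangle r0 T u r -> Isph balance u r = 0.
Proof.
  intros HB. pose proof cont_on_densities as (_ & _ & _ & _ & _ & _ & cbal).
  unfold Isph.
  rewrite (RInt_derive_Icc (fun s => sqrt (1 - s ^ 2) * RP_phi u r s * / r)
             (fun s => RInt (fun p => balance u r s p) 0 (2 * PI))); [| lra | | |].
  - replace (1 - 1 ^ 2) with 0 by ring. replace (1 - (-1) ^ 2) with 0 by ring.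
    rewrite sqrt_0. ring.
  - cont_facts. apply (cont_Icc_op2 _ _ Rmult); [apply cont_op2_mult | | apply cont_Icc_const].
    apply (cont_Icc_op2 _ _ Rmult); [apply cont_op2_mult | |].
    + apply cont_Icc_continuity_pt. intros x Hx. reg; nra.
    + apply (cont_Icc_line D (fun u r s p => RInt (fun q => R_ u r s q * P u r s q) 0 (2 * PI)) (-1) 1
               (fun _ => u) (fun _ => r) (fun s => s) (fun _ => 0)); auto using lip1_const, lip1_id.
      * apply (cont_on_RInt_phi (triangle r0 T) (fun u r s p => R_ u r s p * P u r s p)). cont_on_tac.
      * intros; split; auto.
  - apply (cont_Icc_line D (fun u r s p => RInt (fun q => balance u r s q) 0 (2 * PI)) (-1) 1
             (fun _ => u) (fun _ => r) (fun s => s) (fun _ => 0)); auto using lip1_const, lip1_id.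
    + apply cont_on_RInt_phi; auto.
    + intros; split; auto.
  - intros s Hs. apply is_derive_weighted_RP_phi; auto.
Qed.


Lemma Isph_energy_inequality u r : triangle r0 T u r ->
  Isph eR_u u r <= 1/2 * (Isph eR_r u r - Isph ePQ_r u r).
Proof.
  intros HB. pose proof cont_on_densities as (_ & _ & ceRu & ceRr & cePQr & closs & _).
  assert (Hbal := Isph_balance u r HB). unfold balance in Hbal.
  rewrite (Isph_plus (triangle r0 T)
             (fun u r s p => eR_u u r s p + -1/2 * eR_r u r s p + 1/2 * ePQ_r u r s p) loss),
    (Isph_plus (triangle r0 T)
       (fun u r s p => eR_u u r s p + -1/2 * eR_r u r s p) (fun u r s p => 1/2 * ePQ_r u r s p)),
    (Isph_plus (triangle r0 T) eR_u (fun u r s p => -1/2 * eR_r u r s p)),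
    !(Isph_scal (triangle r0 T)) in Hbal; auto; cont_on_tac.
  assert (Hloss : 0 <= Isph loss u r).
  { apply (Isph_ge0 (triangle r0 T)); auto. intros s p _. unfold loss.
    destruct HB as [_ [H _]]. pose proof (pow2_ge_0 (P u r s p)); pose proof (pow2_ge_0 (Q u r s p)).
    apply Rmult_le_pos; [lra | left; apply Rinv_0_lt_compat; lra]. }
  lra.
Qed.

Lemma RInt_Isph_eR_u r : r0 <= r <= T + r0 ->
  RInt (fun u => Isph eR_u u r) 0 (T + r0 - r) = Isph eR (T + r0 - r) r - Isph eR 0 r.
Proof.
  intros Hr. pose proof cont_on_densities as (ceR & _ & ceRu & _).
  assert (Hin : forall u, 0 <= u <= T + r0 - r -> triangle r0 T u r) by (unfold triangle; intros; lra).
  apply (RInt_derive_Icc (fun u => Isph eR u r) (fun u => Isph eR_u u r)); [lra | | |].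
  - apply (cont_Icc_Isph (triangle r0 T) eR 0 (T + r0 - r) (fun u => u) (fun _ => r));
      auto using lip1_id, lip1_const.
  - apply (cont_Icc_Isph (triangle r0 T) eR_u 0 (T + r0 - r) (fun u => u) (fun _ => r));
      auto using lip1_id, lip1_const.
  - intros x Hx.
    apply (is_derive_Isph_u (triangle r0 T) eR eR_u x r (Rmin (x - 0) (T + r0 - r - x))); auto.
    + apply Rmin_pos; lra.
    + intros y Hy. apply ball_in_interval in Hy. apply Hin; lra.
    + intros y s p Hy Hs. apply ball_in_interval in Hy.
      apply (is_derive_Rsqr (fun z => R_ z r s p)).
      apply (C1_on_derive_u _ _ _ _ _ _ _ CR); auto; lra.
Qed.

Lemma RInt_Isph_flux_r u : 0 <= u <= T ->
  RInt (fun r => Isph eR_r u r - Isph ePQ_r u r) r0 (T + r0 - u) =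
  (Isph eR u (T + r0 - u) - Isph ePQ u (T + r0 - u)) - (Isph eR u r0 - Isph ePQ u r0).
Proof.
  intros Hu. pose proof cont_on_densities as (ceR & cePQ & _ & ceRr & cePQr & _).
  assert (Hin : forall r, r0 <= r <= T + r0 - u -> triangle r0 T u r) by (unfold triangle; intros; lra).
  assert (Hline : forall X, cont_on D X -> cont_Icc r0 (T + r0 - u) (fun r => Isph X u r)).
  { intros X cX. apply (cont_Icc_Isph (triangle r0 T) X r0 (T + r0 - u) (fun _ => u) (fun r => r));
      auto using lip1_id, lip1_const. }
  apply (RInt_derive_Icc (fun r => Isph eR u r - Isph ePQ u r) (fun r => Isph eR_r u r - Isph ePQ_r u r));
    [lra | apply (cont_Icc_op2 _ _ Rminus); auto using cont_op2_minus
    | apply (cont_Icc_op2 _ _ Rminus); auto using cont_op2_minus |].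
  intros x Hx.
  assert (Heta : 0 < Rmin (x - r0) (T + r0 - u - x)) by (apply Rmin_pos; lra).
  assert (Hball : forall y, Rabs (y - x) < Rmin (x - r0) (T + r0 - u - x) -> triangle r0 T u y)
    by (intros y Hy; apply ball_in_interval in Hy; apply Hin; lra).
  apply is_derive_Rminus.
  - apply (is_derive_Isph_r (triangle r0 T) eR eR_r u x _ ceR ceRr Heta Hball).
    intros y s p Hy Hs. apply ball_in_interval in Hy.
    apply (is_derive_Rsqr (fun z => R_ u z s p)).
    apply (C1_on_derive_r _ _ _ _ _ _ _ CR); auto; lra.
  - apply (is_derive_Isph_r (triangle r0 T) ePQ ePQ_r u x _ cePQ cePQr Heta Hball).
    intros y s p Hy Hs. apply ball_in_interval in Hy.
    apply (is_derive_Rplus (fun z => P u z s p ^ 2) (fun z => Q u z s p ^ 2));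
      [apply (is_derive_Rsqr (fun z => P u z s p)) | apply (is_derive_Rsqr (fun z => Q u z s p))].
    + apply (C1_on_derive_r _ _ _ _ _ _ _ CP); auto; lra.
    + apply (C1_on_derive_r _ _ _ _ _ _ _ CQ); auto; lra.
Qed.


Hypothesis HT : 0 <= T.

Lemma RInt_Isph_eR_u_triangle :
  RInt (fun r => Isph eR (T + r0 - r) r) r0 (T + r0) - RInt (fun r => Isph eR 0 r) r0 (T + r0)
  = RInt (fun u => RInt (fun r => Isph eR_u u r) r0 (T + r0 - u)) 0 T.
Proof.
  pose proof cont_on_densities as (ceR & _ & ceRu & _).
  rewrite <- RInt_triangle_swap_Isph by auto.
  rewrite <- RInt_Rminus.
  - apply RInt_ext. intros r Hr. rewrite Rmin_left, Rmax_right in Hr by lra.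
    symmetry; apply RInt_Isph_eR_u; lra.
  - apply (ex_RInt_Isph (triangle r0 T) eR r0 (T + r0) (fun r => T + r0 - r) (fun r => r));
      auto using lip1_reflect, lip1_id; [lra | unfold triangle; intros; lra].
  - apply (ex_RInt_Isph (triangle r0 T) eR r0 (T + r0) (fun _ => 0) (fun r => r));
      auto using lip1_const, lip1_id; [lra | unfold triangle; intros; lra].
Qed.

Lemma RInt_Isph_eR_u_le u : 0 <= u <= T ->
  RInt (fun r => Isph eR_u u r) r0 (T + r0 - u) <=
  1/2 * ((Isph eR u (T + r0 - u) - Isph ePQ u (T + r0 - u)) - (Isph eR u r0 - Isph ePQ u r0)).
Proof.
  intros Hu. pose proof cont_on_densities as (_ & _ & ceRu & ceRr & cePQr & _).
  assert (Hex : forall X, cont_on D X -> ex_RInt (fun r => Isph X u r) r0 (T + r0 - u)).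
  { intros X cX. apply (ex_RInt_Isph (triangle r0 T) X r0 (T + r0 - u) (fun _ => u) (fun r => r));
      auto using lip1_const, lip1_id; [lra | unfold triangle; intros; lra]. }
  rewrite <- RInt_Isph_flux_r, <- RInt_Rmult_l by (try apply ex_RInt_Rminus; auto).
  apply RInt_le; [lra | auto | apply ex_RInt_Rmult_l, ex_RInt_Rminus; auto |].
  intros r Hr. apply Isph_energy_inequality. unfold triangle; lra.
Qed.

Lemma triangle_energy_inequality :
  RInt (fun r => Isph eR (T + r0 - r) r) r0 (T + r0) - RInt (fun r => Isph eR 0 r) r0 (T + r0) <=
  1/2 * ((RInt (fun r => Isph eR (T + r0 - r) r) r0 (T + r0)
          - RInt (fun r => Isph ePQ (T + r0 - r) r) r0 (T + r0))
         - (RInt (fun u => Isph eR u r0) 0 T - RInt (fun u => Isph ePQ u r0) 0 T)).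
Proof.
  pose proof cont_on_densities as (ceR & cePQ & ceRu & _).
  assert (Hseg : forall X fr, cont_on D X -> lip1 fr -> (forall u, 0 <= u <= T -> triangle r0 T u (fr u)) ->
            ex_RInt (fun u => Isph X u (fr u)) 0 T)
    by (intros; apply (ex_RInt_Isph (triangle r0 T)); auto using lip1_id).
  assert (Hhyp_in : forall u, 0 <= u <= T -> triangle r0 T u (T + r0 - u)) by (unfold triangle; intros; lra).
  assert (Hside_in : forall u, 0 <= u <= T -> triangle r0 T u r0) by (unfold triangle; intros; lra).
  assert (exRh := Hseg eR _ ceR (lip1_reflect _) Hhyp_in).
  assert (exPQh := Hseg ePQ _ cePQ (lip1_reflect _) Hhyp_in).
  assert (exRs := Hseg eR _ ceR (lip1_const _) Hside_in).
  assert (exPQs := Hseg ePQ _ cePQ (lip1_const _) Hside_in).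
  assert (Hhyp := ex_RInt_Rminus _ _ _ _ exRh exPQh).
  assert (Hside := ex_RInt_Rminus _ _ _ _ exRs exPQs).
  rewrite RInt_Isph_eR_u_triangle, <- !RInt_hypotenuse by auto.
  assert (Hdiff := ex_RInt_Rminus _ _ _ _ Hhyp Hside).
  assert (Hsplit : RInt (fun u => 1/2 * ((Isph eR u (T + r0 - u) - Isph ePQ u (T + r0 - u))
                                        - (Isph eR u r0 - Isph ePQ u r0))) 0 T
                   = 1/2 * ((RInt (fun u => Isph eR u (T + r0 - u)) 0 T
                             - RInt (fun u => Isph ePQ u (T + r0 - u)) 0 T)
                            - (RInt (fun u => Isph eR u r0) 0 T - RInt (fun u => Isph ePQ u r0) 0 T))).
  { rewrite (RInt_Rmult_l _ _ _ _ Hdiff), (RInt_Rminus _ _ _ _ Hhyp Hside).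
    rewrite (RInt_Rminus _ _ _ _ exRh exPQh), (RInt_Rminus _ _ _ _ exRs exPQs). reflexivity. }
  rewrite <- Hsplit.
  apply RInt_le; [lra | apply ex_RInt_triangle_Isph; auto | apply ex_RInt_Rmult_l; exact Hdiff |].
  intros u Hu. apply RInt_Isph_eR_u_le. lra.
Qed.

Lemma normT2_split :
  normT2 r0 T R_ P Q =
  RInt (fun r => Isph eR (T + r0 - r) r) r0 (T + r0) + RInt (fun r => Isph ePQ (T + r0 - r) r) r0 (T + r0).
Proof.
  pose proof cont_on_densities as (ceR & cePQ & _).
  assert (Hex : forall X, cont_on D X -> ex_RInt (fun r => Isph X (T + r0 - r) r) r0 (T + r0)).
  { intros X cX. apply (ex_RInt_Isph (triangle r0 T) X r0 (T + r0) (fun r => T + r0 - r) (fun r => r));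
      auto using lip1_reflect, lip1_id; try lra. unfold triangle; intros; lra. }
  unfold normT2, int3. rewrite <- RInt_Rplus by auto. apply RInt_ext. intros x Hx.
  rewrite Rmin_left, Rmax_right in Hx by lra.
  rewrite <- (Isph_plus (triangle r0 T) eR ePQ) by (auto; unfold triangle; lra).
  unfold Isph. apply RInt_ext; intros. apply RInt_ext; intros. unfold eR, ePQ. R_ring.
Qed.

Lemma RInt_Sigma_r_ge0 :
  0 <= RInt (fun u => Isph eR u r0) 0 T /\ 0 <= RInt (fun u => Isph ePQ u r0) 0 T.
Proof.
  pose proof cont_on_densities as (ceR & cePQ & _).
  assert (Hge0 : forall X, cont_on D X -> (forall u r s p, 0 <= X u r s p) ->
            0 <= RInt (fun u => Isph X u r0) 0 T).
  { intros X cX HX. apply RInt_ge_0; [auto | |].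
    - apply (ex_RInt_Isph (triangle r0 T) X 0 T (fun u => u) (fun _ => r0)); auto using lip1_const, lip1_id.
      unfold triangle; intros; lra.
    - intros u Hu. apply (Isph_ge0 (triangle r0 T)); auto. unfold triangle; lra. }
  split; apply Hge0; auto; intros; unfold eR, ePQ.
  - apply pow2_ge_0.
  - pose proof (pow2_ge_0 (P u r s p)); pose proof (pow2_ge_0 (Q u r s p)); lra.
Qed.

End CharacteristicEnergy.

Theorem theorem2 (r0 T : R) (R_ Ru Rr Rs Rp P Pu Pr Ps Pp Q Qu Qr Qs Qp : F4) :
  0 < r0 -> 0 < T ->
  C1_on (DT r0 T) R_ Ru Rr Rs Rp ->
  C1_on (DT r0 T) P Pu Pr Ps Pp ->
  C1_on (DT r0 T) Q Qu Qr Qs Qp ->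
  periodic_phi (DT r0 T) R_ ->
  periodic_phi (DT r0 T) P ->
  periodic_phi (DT r0 T) Q ->
  (forall u r s p, DT r0 T u r s p -> Rabs s < 1 ->
     2 * Ru u r s p =
       Rr u r s p + sqrt (1 - s ^ 2) / r * Ps u r s p
       + 1 / (r * sqrt (1 - s ^ 2)) * Qp u r s p
       - s * P u r s p / (r * sqrt (1 - s ^ 2))
     /\ Pr u r s p = sqrt (1 - s ^ 2) / r * Rs u r s p - P u r s p / r
     /\ Qr u r s p = 1 / (r * sqrt (1 - s ^ 2)) * Rp u r s p - Q u r s p / r) ->
  normT2 r0 T R_ P Q <= 2 * (int_Sigma_u r0 T R_ + int_Sigma_r r0 T P Q).
Proof.
  (* Only [R Q] is differentiated in [phi]. *)
  intros Hr0 HT CR CP CQ perR _ perQ Hsys.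
  assert (HT' : 0 <= T) by lra.
  assert (Hineq := triangle_energy_inequality r0 T R_ Ru Rr Rs Rp P Pu Pr Ps Pp Q Qu Qr Qs Qp
                     Hr0 CR CP CQ perR perQ Hsys HT').
  assert (Hside := RInt_Sigma_r_ge0 r0 T R_ Ru Rr Rs Rp P Pu Pr Ps Pp Q Qu Qr Qs Qp Hr0 CR CP CQ HT').
  rewrite (normT2_split r0 T R_ Ru Rr Rs Rp P Pu Pr Ps Pp Q Qu Qr Qs Qp Hr0 CR CP CQ HT').
  change (int_Sigma_u r0 T R_) with (RInt (fun r => Isph (eR R_) 0 r) r0 (T + r0)).
  change (int_Sigma_r r0 T P Q) with (RInt (fun u => Isph (ePQ P Q) u r0) 0 T).
  lra.
Qed.
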